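(* Let $M$ be a term of the CCV $\lambda\mu$-calculus and let $[\![M]\!]$ be its CPS translation, computed from an arbitrary syntax-tree representative of $M$ (the representatives may differ in how the equality (E2) is used to bracket $\mu$ and $\mathsf{where}$). If $[\![M]\!]\to^* N$ by $\beta\eta$-reduction in the target calculus, then $M\to^*(N^{-1})^{\downarrow}$ in the CCV $\lambda\mu$-calculus.
   Context: CCV $\lambda\mu$-calculus. Ordinary variables $x,y,z,\dots$ and continuation variables $k,l,m,\dots$ form disjoint sets. Terms $M$ and jumps $J$ are given by $M ::= x \mid \lambda x.M \mid MM \mid (M\ \mathsf{where}\ x:=M) \mid \mu k.J$ and $J ::= [k]M \mid (J\ \mathsf{where}\ x:=M)$. (Here $(L\ \mathsf{where}\ x:=M)$ is the let-construct $\mathsf{let}\ x=M\ \mathsf{in}\ L$ written body-first.) $\lambda x$ binds $x$ in its body; in $(L\ \mathsf{where}\ x:=M)$ and $(J\ \mathsf{where}\ x:=M)$ the variable $x$ is bound with scope $L$ (resp. $J$) only; $\mu k$ binds $k$. Terms and jumps are identified up to $\alpha$-conversion and up to the congruence generated by: (E1) $(L\ \mathsf{where}\ x:=(M\ \mathsf{where}\ y:=N))=((L\ \mathsf{where}\ x:=M)\ \mathsf{where}\ y:=N)$ if $y$ is not free in $L$; (E2) $((\mu k.J)\ \mathsf{where}\ x:=M)=\mu k.(J\ \mathsf{where}\ x:=M)$ if $k$ is not free in $M$; (E3) $[k](L\ \mathsf{where}\ x:=M)=([k]L\ \mathsf{where}\ x:=M)$. A value $V$ is a variable or a $\lambda$-abstraction;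 other terms are non-values ($N$ below denotes a non-value). Reduction rules ($z$ fresh): (ad$_1$) $NM\to (zM\ \mathsf{where}\ z:=N)$; (ad$_2$) $VN\to (Vz\ \mathsf{where}\ z:=N)$; ($\beta_\lambda$) $(\lambda x.M)V\to (M\ \mathsf{where}\ x:=V)$; ($\beta_{let}$) $(M\ \mathsf{where}\ x:=V)\to M\{V/x\}$; ($\beta_\mu$) $(M\ \mathsf{where}\ x:=\mu k.J)\to \mu k.J\{[k]\square\mapsto[k](M\ \mathsf{where}\ x:=\square)\}$; ($\beta_{jmp}$) $[l]\mu k.J\to J\{l/k\}$; ($\eta_\lambda$) $\lambda x.Vx\to V$ ($x$ not free in $V$); ($\eta_{let}$) $(x\ \mathsf{where}\ x:=M)\to M$; ($\eta_\mu$) $\mu k.[k]M\to M$ ($k$ not free in $M$). Here $J\{[k]\square\mapsto[k](M\ \mathsf{where}\ x:=\square)\}$ replaces, recursively, each subjump $[k]Q$ of $J$ with $k$ free by $[k](M\ \mathsf{where}\ x:=Q)$ (capture-avoiding), and $J\{l/k\}$ replaces each such $[k]Q$ by $[l]Q$. $\to$ is the compatible closure of these rules, $\to^*$ its reflexive-transitive closure. Reduction by $\eta_\mu$ is called vertical; $M^{\downarrow}$ denotes the normal form of $M$ with respect to vertical reductions. Target calculus: a sorted $\lambda$-calculus with ordinary variables $x$ (sort $W$) and continuation variables $k$ (sort $K$): $T::=\lambda k.Q\mid WW$, $Q::=KW\mid TK$, $W::=x\mid\lambda x.T$, $K::=k\mid\lambda x.Q$, with ordinary $\beta\eta$-reduction.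 CPS translation: for a CCV term $M$ and a target continuation $K$, define $\langle M\rangle[K]$ and $\langle J\rangle$ by: $\langle V\rangle[K]=KV^*$; $\langle V_1V_2\rangle[K]=V_1^*V_2^*K$; $\langle VN\rangle[K]=\langle N\rangle[\lambda y.V^*yK]$; $\langle NV\rangle[K]=\langle N\rangle[\lambda x.xV^*K]$; $\langle N_1N_2\rangle[K]=\langle N_1\rangle[\lambda x.\langle N_2\rangle[\lambda y.xyK]]$; $\langle (L\ \mathsf{where}\ x:=M)\rangle[K]=\langle M\rangle[\lambda x.\langle L\rangle[K]]$ (renaming $x$ if it is free in $K$); $\langle\mu k.J\rangle[K]=(\lambda k.\langle J\rangle)K$; $\langle[k]M\rangle=\langle M\rangle[k]$; $\langle (J\ \mathsf{where}\ x:=M)\rangle=\langle M\rangle[\lambda x.\langle J\rangle]$; $x^*=x$; $(\lambda x.M)^*=\lambda x k.\langle M\rangle[k]$; $[\![M]\!]=\lambda k.\langle M\rangle[k]$ (fresh $x,y,k$ where introduced). Inverse translation from the target calculus to CCV: $(\lambda k.Q)^{-1}=\mu k.Q^{-1}$; $(W_1W_2)^{-1}=W_1^{-1}W_2^{-1}$; $(KW)^{-1}=K^{-1}[W^{-1}]$; $(TK)^{-1}=K^{-1}[T^{-1}]$; $x^{-1}=x$; $(\lambda x.T)^{-1}=\lambda x.T^{-1}$; $k^{-1}=[k]\square$; $(\lambda x.Q)^{-1}=(Q^{-1}\ \mathsf{where}\ x:=\square)$, where $K^{-1}$ is a jump with one hole $\square$ and $K^{-1}[M]$ fills the hole with $M$.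 *)

(* Both calculi use de Bruijn indices with TWO separate index
   spaces: ordinary variables (bound by lambda / where) and continuation
   variables (bound by mu, resp. the target's continuation lambda).
   alpha-conversion is therefore syntactic identity. *)
From Stdlib Require Import Arith Relations.

(* [Wh L M] is (L where 0 := M): index 0 is bound in L only.
   [JWh J M] is (J where 0 := M): index 0 bound in J only.
   [Mu J] binds continuation index 0 in J.  [Jmp k M] is [k]M. *)
Inductive tm : Type :=
| Var : nat -> tm
| Lam : tm -> tm
| App : tm -> tm -> tm
| Wh  : tm -> tm -> tm
| Mu  : jm -> tm
with jm : Type :=
| Jmp : nat -> tm -> jm
| JWh : jm -> tm -> jm.

Definition is_val (t : tm) : bool :=
  match t with Var _ | Lam _ => true | _ => false end.

Fixpoint sho (c : nat) (t : tm) : tm :=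
  match t with
  | Var x => Var (if x <? c then x else S x)
  | Lam b => Lam (sho (S c) b)
  | App a b => App (sho c a) (sho c b)
  | Wh l m => Wh (sho (S c) l) (sho c m)
  | Mu j => Mu (shoj c j)
  end
with shoj (c : nat) (j : jm) : jm :=
  match j with
  | Jmp k m => Jmp k (sho c m)
  | JWh j m => JWh (shoj (S c) j) (sho c m)
  end.

Fixpoint shk (c : nat) (t : tm) : tm :=
  match t with
  | Var x => Var x
  | Lam b => Lam (shk c b)
  | App a b => App (shk c a) (shk c b)
  | Wh l m => Wh (shk c l) (shk c m)
  | Mu j => Mu (shkj (S c) j)
  end
with shkj (c : nat) (j : jm) : jm :=
  match j with
  | Jmp k m => Jmp (if k <? c then k else S k) (shk c m)
  | JWh j m => JWh (shkj c j) (shk c m)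
  end.

Fixpoint subst_o (j : nat) (V : tm) (t : tm) : tm :=
  match t with
  | Var x => if x =? j then V else if j <? x then Var (pred x) else Var x
  | Lam b => Lam (subst_o (S j) (sho 0 V) b)
  | App a b => App (subst_o j V a) (subst_o j V b)
  | Wh l m => Wh (subst_o (S j) (sho 0 V) l) (subst_o j V m)
  | Mu J => Mu (subst_oj j (shk 0 V) J)
  end
with subst_oj (j : nat) (V : tm) (J : jm) : jm :=
  match J with
  | Jmp k m => Jmp k (subst_o j V m)
  | JWh J m => JWh (subst_oj (S j) (sho 0 V) J) (subst_o j V m)
  end.

Fixpoint crn (j l : nat) (t : tm) : tm :=
  match t with
  | Var x => Var x
  | Lam b => Lam (crn j l b)
  | App a b => App (crn j l a) (crn j l b)
  | Wh a b => Wh (crn j l a) (crn j l b)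
  | Mu J => Mu (crnj (S j) (S l) J)
  end
with crnj (j l : nat) (J : jm) : jm :=
  match J with
  | Jmp k m => Jmp (if k =? j then l else if j <? k then pred k else k) (crn j l m)
  | JWh J m => JWh (crnj j l J) (crn j l m)
  end.

(* structural substitution J{[j]□ ↦ [j](M where 0 := □)}; in M, ordinary
   index 0 is the variable bound by the new "where". *)
Fixpoint ssub (j : nat) (M : tm) (t : tm) : tm :=
  match t with
  | Var x => Var x
  | Lam b => Lam (ssub j (sho 1 M) b)
  | App a b => App (ssub j M a) (ssub j M b)
  | Wh l m => Wh (ssub j (sho 1 M) l) (ssub j M m)
  | Mu J => Mu (ssubj (S j) (shk 0 M) J)
  end
with ssubj (j : nat) (M : tm) (J : jm) : jm :=
  match J with
  | Jmp k q => if k =? j then Jmp k (Wh M (ssub j M q)) else Jmp k (ssub j M q)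
  | JWh J m => JWh (ssubj j (sho 1 M) J) (ssub j M m)
  end.

Inductive eqt : tm -> tm -> Prop :=
| eqt_refl t : eqt t t
| eqt_sym t u : eqt t u -> eqt u t
| eqt_trans t u v : eqt t u -> eqt u v -> eqt t v
| eqt_E1 L M N : eqt (Wh L (Wh M N)) (Wh (Wh (sho 1 L) M) N)
| eqt_E2 J M : eqt (Wh (Mu J) M) (Mu (JWh J (shk 0 M)))
| eqt_Lam t t' : eqt t t' -> eqt (Lam t) (Lam t')
| eqt_App a a' b b' : eqt a a' -> eqt b b' -> eqt (App a b) (App a' b')
| eqt_Wh a a' b b' : eqt a a' -> eqt b b' -> eqt (Wh a b) (Wh a' b')
| eqt_Mu J J' : eqj J J' -> eqt (Mu J) (Mu J')
with eqj : jm -> jm -> Prop :=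
| eqj_refl J : eqj J J
| eqj_sym J J' : eqj J J' -> eqj J' J
| eqj_trans J1 J2 J3 : eqj J1 J2 -> eqj J2 J3 -> eqj J1 J3
| eqj_E3 k L M : eqj (Jmp k (Wh L M)) (JWh (Jmp k L) M)
| eqj_Jmp k t t' : eqt t t' -> eqj (Jmp k t) (Jmp k t')
| eqj_JWh J J' t t' : eqj J J' -> eqt t t' -> eqj (JWh J t) (JWh J' t').

Inductive comp (Rt : tm -> tm -> Prop) (Rj : jm -> jm -> Prop) : tm -> tm -> Prop :=
| comp_root t u : Rt t u -> comp Rt Rj t u
| comp_Lam t u : comp Rt Rj t u -> comp Rt Rj (Lam t) (Lam u)
| comp_App1 a a' b : comp Rt Rj a a' -> comp Rt Rj (App a b) (App a' b)
| comp_App2 a b b' : comp Rt Rj b b' -> comp Rt Rj (App a b) (App a b')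
| comp_Wh1 a a' b : comp Rt Rj a a' -> comp Rt Rj (Wh a b) (Wh a' b)
| comp_Wh2 a b b' : comp Rt Rj b b' -> comp Rt Rj (Wh a b) (Wh a b')
| comp_Mu J J' : compj Rt Rj J J' -> comp Rt Rj (Mu J) (Mu J')
with compj (Rt : tm -> tm -> Prop) (Rj : jm -> jm -> Prop) : jm -> jm -> Prop :=
| compj_root J J' : Rj J J' -> compj Rt Rj J J'
| compj_Jmp k t u : comp Rt Rj t u -> compj Rt Rj (Jmp k t) (Jmp k u)
| compj_JWh1 J J' t : compj Rt Rj J J' -> compj Rt Rj (JWh J t) (JWh J' t)
| compj_JWh2 J t t' : comp Rt Rj t t' -> compj Rt Rj (JWh J t) (JWh J t').

Inductive top_t : tm -> tm -> Prop :=
| r_ad1 N M : is_val N = false ->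
    top_t (App N M) (Wh (App (Var 0) (sho 0 M)) N)
| r_ad2 V N : is_val V = true -> is_val N = false ->
    top_t (App V N) (Wh (App (sho 0 V) (Var 0)) N)
| r_beta_lam M V : is_val V = true -> top_t (App (Lam M) V) (Wh M V)
| r_beta_let M V : is_val V = true -> top_t (Wh M V) (subst_o 0 V M)
| r_beta_mu M J : top_t (Wh M (Mu J)) (Mu (ssubj 0 (shk 0 M) J))
| r_eta_lam V : is_val V = true -> top_t (Lam (App (sho 0 V) (Var 0))) V
| r_eta_let M : top_t (Wh (Var 0) M) M
| r_eta_mu M : top_t (Mu (Jmp 0 (shk 0 M))) M.

Inductive top_j : jm -> jm -> Prop :=
| r_beta_jmp l J : top_j (Jmp l (Mu J)) (crnj 0 l J).

Inductive vtop_t : tm -> tm -> Prop :=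
| v_eta_mu M : vtop_t (Mu (Jmp 0 (shk 0 M))) M.
Inductive vtop_j : jm -> jm -> Prop := .

Definition red : tm -> tm -> Prop :=
  clos_refl_trans tm (fun a b => eqt a b \/ comp top_t top_j a b).

Definition vred : tm -> tm -> Prop :=
  clos_refl_trans tm (fun a b => eqt a b \/ comp vtop_t vtop_j a b).

Definition vnf (P : tm) : Prop :=
  forall P' P'', eqt P P' -> ~ comp vtop_t vtop_j P' P''.

(* WLam, KLam bind ordinary index 0; TLamK binds continuation index 0 *)
Inductive tT : Type :=
| TLamK : tQ -> tT
| TApp : tW -> tW -> tT
with tQ : Type :=
| QK : tK -> tW -> tQ
| QT : tT -> tK -> tQ
with tW : Type :=
| WVar : nat -> tW
| WLam : tT -> tW
with tK : Type :=
| KVar : nat -> tK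
| KLam : tQ -> tK.

Fixpoint shWT (c : nat) (t : tT) : tT :=
  match t with TLamK q => TLamK (shWQ c q) | TApp a b => TApp (shWW c a) (shWW c b) end
with shWQ (c : nat) (q : tQ) : tQ :=
  match q with QK k w => QK (shWK c k) (shWW c w) | QT t k => QT (shWT c t) (shWK c k) end
with shWW (c : nat) (w : tW) : tW :=
  match w with WVar x => WVar (if x <? c then x else S x) | WLam t => WLam (shWT (S c) t) end
with shWK (c : nat) (k : tK) : tK :=
  match k with KVar n => KVar n | KLam q => KLam (shWQ (S c) q) end.

Fixpoint shKT (c : nat) (t : tT) : tT :=
  match t with TLamK q => TLamK (shKQ (S c) q) | TApp a b => TApp (shKW c a) (shKW c b) end
with shKQ (c : nat) (q : tQ) : tQ :=
  match q with QK k w => QK (shKK c k) (shKW c w) | QT t k => QT (shKT c t) (shKK c k) end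
with shKW (c : nat) (w : tW) : tW :=
  match w with WVar x => WVar x | WLam t => WLam (shKT c t) end
with shKK (c : nat) (k : tK) : tK :=
  match k with KVar n => KVar (if n <? c then n else S n) | KLam q => KLam (shKQ c q) end.

Fixpoint subWT (j : nat) (v : tW) (t : tT) : tT :=
  match t with
  | TLamK q => TLamK (subWQ j (shKW 0 v) q)
  | TApp a b => TApp (subWW j v a) (subWW j v b)
  end
with subWQ (j : nat) (v : tW) (q : tQ) : tQ :=
  match q with
  | QK k w => QK (subWK j v k) (subWW j v w)
  | QT t k => QT (subWT j v t) (subWK j v k)
  end
with subWW (j : nat) (v : tW) (w : tW) : tW :=
  match w with
  | WVar x => if x =? j then v else if j <? x then WVar (pred x) else WVar x
  | WLam t => WLam (subWT (S j) (shWW 0 v) t)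
  end
with subWK (j : nat) (v : tW) (k : tK) : tK :=
  match k with
  | KVar n => KVar n
  | KLam q => KLam (subWQ (S j) (shWW 0 v) q)
  end.

Fixpoint subKT (j : nat) (c : tK) (t : tT) : tT :=
  match t with
  | TLamK q => TLamK (subKQ (S j) (shKK 0 c) q)
  | TApp a b => TApp (subKW j c a) (subKW j c b)
  end
with subKQ (j : nat) (c : tK) (q : tQ) : tQ :=
  match q with
  | QK k w => QK (subKK j c k) (subKW j c w)
  | QT t k => QT (subKT j c t) (subKK j c k)
  end
with subKW (j : nat) (c : tK) (w : tW) : tW :=
  match w with
  | WVar x => WVar x
  | WLam t => WLam (subKT j (shWK 0 c) t)
  end
with subKK (j : nat) (c : tK) (k : tK) : tK :=
  match k with
  | KVar n => if n =? j then c else if j <? n then KVar (pred n) else KVar n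
  | KLam q => KLam (subKQ j (shWK 0 c) q)
  end.

Inductive stT : tT -> tT -> Prop :=
| stT_beta t w : stT (TApp (WLam t) w) (subWT 0 w t)
| stT_eta t : stT (TLamK (QT (shKT 0 t) (KVar 0))) t
| stT_Lam q q' : stQ q q' -> stT (TLamK q) (TLamK q')
| stT_App1 a a' b : stW a a' -> stT (TApp a b) (TApp a' b)
| stT_App2 a b b' : stW b b' -> stT (TApp a b) (TApp a b')
with stQ : tQ -> tQ -> Prop :=
| stQ_betaK q k : stQ (QT (TLamK q) k) (subKQ 0 k q)
| stQ_betaW q w : stQ (QK (KLam q) w) (subWQ 0 w q)
| stQ_K1 k k' w : stK k k' -> stQ (QK k w) (QK k' w)
| stQ_K2 k w w' : stW w w' -> stQ (QK k w) (QK k w')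
| stQ_T1 t t' k : stT t t' -> stQ (QT t k) (QT t' k)
| stQ_T2 t k k' : stK k k' -> stQ (QT t k) (QT t k')
with stW : tW -> tW -> Prop :=
| stW_eta w : stW (WLam (TApp (shWW 0 w) (WVar 0))) w
| stW_Lam t t' : stT t t' -> stW (WLam t) (WLam t')
with stK : tK -> tK -> Prop :=
| stK_eta k : stK (KLam (QK (shWK 0 k) (WVar 0))) k
| stK_Lam q q' : stQ q q' -> stK (KLam q) (KLam q').

Definition tred : tT -> tT -> Prop := clos_refl_trans tT stT.

Definition up (r : nat -> nat) : nat -> nat :=
  fun i => match i with 0 => 0 | S i => S (r i) end.

(* cps M ro rk K = <M>[K], where ro / rk map the free ordinary / continuation
   variables of the source term M to target indices. *)
Fixpoint cps (M : tm) (ro rk : nat -> nat) (K : tK) {struct M} : tQ :=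
  match M with
  | Var x => QK K (WVar (ro x))
  | Lam b => QK K (WLam (TLamK (cps b (up ro) (fun i => S (rk i)) (KVar 0))))
  | App a b =>
      if is_val a then
        if is_val b then QT (TApp (star a ro rk) (star b ro rk)) K
        else cps b ro rk (KLam (QT (TApp (shWW 0 (star a ro rk)) (WVar 0)) (shWK 0 K)))
      else
        if is_val b then
          cps a ro rk (KLam (QT (TApp (WVar 0) (shWW 0 (star b ro rk))) (shWK 0 K)))
        else
          cps a ro rk (KLam (cps b (fun i => S (ro i)) rk
                               (KLam (QT (TApp (WVar 1) (WVar 0)) (shWK 0 (shWK 0 K))))))
  | Wh l m => cps m ro rk (KLam (cps l (up ro) rk (shWK 0 K)))
  | Mu J => QT (TLamK (cpsj J ro (up rk))) K
  end
with star (M : tm) (ro rk : nat -> nat) {struct M} : tW :=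
  match M with
  | Var x => WVar (ro x)
  | Lam b => WLam (TLamK (cps b (up ro) (fun i => S (rk i)) (KVar 0)))
  | _ => WVar 0 (* not used: star is only applied to values *)
  end
with cpsj (J : jm) (ro rk : nat -> nat) {struct J} : tQ :=
  match J with
  | Jmp k m => cps m ro rk (KVar (rk k))
  | JWh J m => cps m ro rk (KLam (cpsj J (up ro) rk))
  end.

Definition cps_top (M : tm) : tT := TLamK (cps M (fun i => i) S (KVar 0)).

Fixpoint invT (t : tT) : tm :=
  match t with
  | TLamK q => Mu (invQ q)
  | TApp a b => App (invW a) (invW b)
  end
with invQ (q : tQ) : jm :=
  match q with
  | QK k w => invK k (invW w)
  | QT t k => invK k (invT t)
  end
with invW (w : tW) : tm :=
  match w with
  | WVar x => Var x
  | WLam t => Lam (invT t)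
  end
with invK (k : tK) (M : tm) : jm :=
  match k with
  | KVar n => Jmp n M
  | KLam q => JWh (invQ q) M
  end.

From Stdlib Require Import Relations Arith Lia Bool List.

(* Let [vnorm] contract all eta_mu-redexes, bottom up and modulo (E3); it computes
   vertical normal forms.  Three facts combine.
   (1) The inverse translation maps each target beta/eta step to CCV steps that never use
       the administrative rules ad_1, ad_2: a beta step becomes beta_lambda followed by
       beta_let, a beta step on continuations becomes beta_jmp (after beta_mu when the
       continuation is an abstraction), and the eta steps become eta_lambda, eta_mu,
       eta_let, or beta_let with a variable.
   (2) Non-administrative reduction commutes with vertical normalisation: if [t] reduces to
       [u] without ad_1, ad_2, then [vnorm t] reduces to [vnorm u].
   (3) Conversely [M] reduces, by ad_1, ad_2, (E1) and eta_mu, to [vnorm ([[M]]^-1)]; this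
       is proved by induction on [M] for [<M>[K]] with an arbitrary continuation [K].
   Hence M ->* vnorm([[M]]^-1) ->* vnorm(N^-1), which is congruent to the vertical normal
   form of N^-1. *)

Scheme tm_ind' := Induction for tm Sort Prop
with jm_ind' := Induction for jm Sort Prop.
Combined Scheme tm_jm_ind from tm_ind', jm_ind'.

Ltac nat_cases := repeat (match goal with
 | |- context [?a <? ?b] => destruct (Nat.ltb_spec a b)
 | |- context [?a =? ?b] => destruct (Nat.eqb_spec a b)
 | H: context [?a <? ?b] |- _ => destruct (Nat.ltb_spec a b)
 | H: context [?a =? ?b] |- _ => destruct (Nat.eqb_spec a b)
 end); try lia.

Definition shift_at (c x : nat) : nat := if x <? c then x else S x.

Definition rename_at (j l k : nat) : nat :=
  if k =? j then l else if j <? k then pred k else k.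

Fixpoint ren (r s : nat -> nat) (t : tm) : tm :=
 match t with
 | Var x => Var (r x)
 | Lam b => Lam (ren (up r) s b)
 | App a b => App (ren r s a) (ren r s b)
 | Wh l m => Wh (ren (up r) s l) (ren r s m)
 | Mu J => Mu (renj r (up s) J)
 end
with renj (r s : nat -> nat) (J : jm) : jm :=
 match J with
 | Jmp k m => Jmp (s k) (ren r s m)
 | JWh J m => JWh (renj (up r) s J) (ren r s m)
 end.

Lemma up_ext r r' : (forall x, r x = r' x) -> forall x, up r x = up r' x.
Proof. intros H [|x]; simpl; auto. Qed.

Lemma ren_ext_mut :
 (forall t r r' s s', (forall x, r x = r' x) -> (forall x, s x = s' x) ->
    ren r s t = ren r' s' t) /\
 (forall J r r' s s', (forall x, r x = r' x) -> (forall x, s x = s' x) ->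
    renj r s J = renj r' s' J).
Proof. apply tm_jm_ind; intros; simpl; f_equal; eauto using up_ext. Qed.
Lemma ren_ext t r r' s s' :
  (forall x, r x = r' x) -> (forall x, s x = s' x) -> ren r s t = ren r' s' t.
Proof. apply ren_ext_mut. Qed.
Lemma renj_ext J r r' s s' :
  (forall x, r x = r' x) -> (forall x, s x = s' x) -> renj r s J = renj r' s' J.
Proof. apply ren_ext_mut. Qed.

Lemma ren_comp_mut :
 (forall t r s r' s', ren r s (ren r' s' t) = ren (fun x => r (r' x)) (fun x => s (s' x)) t) /\
 (forall J r s r' s', renj r s (renj r' s' J) = renj (fun x => r (r' x)) (fun x => s (s' x)) J).
Proof.
 apply tm_jm_ind; intros; simpl; f_equal; rewrite ?H, ?H0;
  try (apply ren_ext || apply renj_ext); intros [|x]; simpl; auto.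
Qed.
Lemma ren_comp t r s r' s' :
  ren r s (ren r' s' t) = ren (fun x => r (r' x)) (fun x => s (s' x)) t.
Proof. apply ren_comp_mut. Qed.
Lemma renj_comp J r s r' s' :
  renj r s (renj r' s' J) = renj (fun x => r (r' x)) (fun x => s (s' x)) J.
Proof. apply ren_comp_mut. Qed.

Lemma ren_id_mut :
 (forall t r s, (forall x, r x = x) -> (forall x, s x = x) -> ren r s t = t) /\
 (forall J r s, (forall x, r x = x) -> (forall x, s x = x) -> renj r s J = J).
Proof.
 apply tm_jm_ind; intros; simpl; f_equal; auto;
  (apply H || apply H0); auto; intros [|x]; simpl; auto.
Qed.
Lemma ren_id t r s : (forall x, r x = x) -> (forall x, s x = x) -> ren r s t = t.
Proof. apply ren_id_mut. Qed.
Lemma renj_id J r s : (forall x, r x = x) -> (forall x, s x = x) -> renj r s J = J.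
Proof. apply ren_id_mut. Qed.

Ltac idx_cases :=
  unfold shift_at, rename_at, up in *;
  repeat (simpl in *; nat_cases;
          try match goal with |- context [match ?x with 0 => _ | S _ => _ end] => destruct x end);
  simpl; try lia.
Ltac ren_ext_idx := first [apply ren_ext | apply renj_ext]; intros; idx_cases.

Lemma sho_ren_mut :
 (forall t c, sho c t = ren (shift_at c) (fun x => x) t) /\
 (forall J c, shoj c J = renj (shift_at c) (fun x => x) J).
Proof.
 apply tm_jm_ind; intros; simpl; f_equal; rewrite ?H, ?H0; auto;
  try ren_ext_idx; unfold shift_at; nat_cases.
Qed.
Lemma sho_ren t c : sho c t = ren (shift_at c) (fun x => x) t.
Proof. apply sho_ren_mut. Qed.
Lemma shoj_ren J c : shoj c J = renj (shift_at c) (fun x => x) J.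
Proof. apply sho_ren_mut. Qed.

Lemma shk_ren_mut :
 (forall t c, shk c t = ren (fun x => x) (shift_at c) t) /\
 (forall J c, shkj c J = renj (fun x => x) (shift_at c) J).
Proof.
 apply tm_jm_ind; intros; simpl; f_equal; rewrite ?H, ?H0; auto;
  try ren_ext_idx; unfold shift_at; nat_cases.
Qed.
Lemma shk_ren t c : shk c t = ren (fun x => x) (shift_at c) t.
Proof. apply shk_ren_mut. Qed.
Lemma shkj_ren J c : shkj c J = renj (fun x => x) (shift_at c) J.
Proof. apply shk_ren_mut. Qed.

Lemma crn_ren_mut :
 (forall t j l, crn j l t = ren (fun x => x) (rename_at j l) t) /\
 (forall J j l, crnj j l J = renj (fun x => x) (rename_at j l) J).
Proof.
 apply tm_jm_ind; intros; simpl; f_equal; rewrite ?H, ?H0; auto;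
  try ren_ext_idx; unfold rename_at; nat_cases.
Qed.
Lemma crn_ren t j l : crn j l t = ren (fun x => x) (rename_at j l) t.
Proof. apply crn_ren_mut. Qed.
Lemma crnj_ren J j l : crnj j l J = renj (fun x => x) (rename_at j l) J.
Proof. apply crn_ren_mut. Qed.

Lemma subst_var_mut :
 (forall t j i, subst_o j (Var i) t = ren (rename_at j i) (fun x => x) t) /\
 (forall J j i, subst_oj j (Var i) J = renj (rename_at j i) (fun x => x) J).
Proof.
 apply tm_jm_ind; intros; simpl; f_equal; rewrite ?H, ?H0; auto;
  try ren_ext_idx; unfold rename_at; nat_cases; auto.
Qed.
Lemma subst_var t j i : subst_o j (Var i) t = ren (rename_at j i) (fun x => x) t.
Proof. apply subst_var_mut. Qed.

Lemma is_val_ren t r s : is_val (ren r s t) = is_val t.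
Proof. destruct t; reflexivity. Qed.

Fixpoint kfree (n : nat) (t : tm) : bool :=
 match t with
 | Var _ => false
 | Lam b => kfree n b
 | App a b => kfree n a || kfree n b
 | Wh l m => kfree n l || kfree n m
 | Mu J => kfreej (S n) J
 end
with kfreej (n : nat) (J : jm) : bool :=
 match J with
 | Jmp k m => (k =? n) || kfree n m
 | JWh J m => kfreej n J || kfree n m
 end.

Lemma kfree_ren_mut :
 (forall t r s k, kfree k t = true -> kfree (s k) (ren r s t) = true) /\
 (forall J r s k, kfreej k J = true -> kfreej (s k) (renj r s J) = true).
Proof.
 apply tm_jm_ind; intros; simpl in *; try discriminate;
  repeat rewrite orb_true_iff in *.
 all: try match goal with H: _ \/ _ |- _ => destruct H; [left|right] end; eauto.
 - apply (H r (up s) (S k)); auto.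
 - apply Nat.eqb_eq in H0. subst. apply Nat.eqb_refl.
Qed.
Lemma kfree_ren t r s k : kfree k t = true -> kfree (s k) (ren r s t) = true.
Proof. apply kfree_ren_mut. Qed.

Lemma kfree_ren_inv_mut :
 (forall t r s n, kfree n (ren r s t) = true -> exists k, s k = n /\ kfree k t = true) /\
 (forall J r s n, kfreej n (renj r s J) = true -> exists k, s k = n /\ kfreej k J = true).
Proof.
 apply tm_jm_ind; intros; simpl in *; try discriminate;
  repeat rewrite orb_true_iff in *; eauto.
 all: try (destruct H1 as [H1|H1];
           [destruct (H _ _ _ H1) as [k [? ?]]|destruct (H0 _ _ _ H1) as [k [? ?]]];
           exists k; rewrite orb_true_iff; auto; fail).
 - destruct (H _ _ _ H0) as [[|k] [E ?]]; simpl in E; try discriminate.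
   injection E; intros; subst; eauto.
 - destruct H0 as [H0|H0].
   + apply Nat.eqb_eq in H0; subst. exists n. rewrite Nat.eqb_refl; auto.
   + destruct (H _ _ _ H0) as [k [? ?]]; exists k; rewrite orb_true_iff; auto.
Qed.
Lemma kfree_ren_inv t r s n :
  kfree n (ren r s t) = true -> exists k, s k = n /\ kfree k t = true.
Proof. apply kfree_ren_inv_mut. Qed.
Lemma kfreej_ren_inv J r s n :
  kfreej n (renj r s J) = true -> exists k, s k = n /\ kfreej k J = true.
Proof. apply kfree_ren_inv_mut. Qed.

Lemma kfree_ren_false t r s n :
  (forall k, kfree k t = true -> s k <> n) -> kfree n (ren r s t) = false.
Proof.
 intros H. destruct (kfree n (ren r s t)) eqn:E; auto.
 destruct (kfree_ren_inv _ _ _ _ E) as [k [? ?]]. exfalso; eapply H; eauto.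
Qed.

Lemma kfree_ren_inj t r s m :
  (forall k, s k = s m -> k = m) -> kfree (s m) (ren r s t) = kfree m t.
Proof.
 intros H. destruct (kfree m t) eqn:E.
 - apply kfree_ren; auto.
 - apply kfree_ren_false. intros k Hk Hs. apply H in Hs; subst; congruence.
Qed.

Lemma kfree_sho n c V : kfree n (sho c V) = kfree n V.
Proof. rewrite sho_ren. apply (kfree_ren_inj V _ (fun x => x) n); auto. Qed.
Lemma kfree_shk0 n V : kfree (S n) (shk 0 V) = kfree n V.
Proof.
 rewrite shk_ren. apply (kfree_ren_inj V (fun x => x) (shift_at 0) n).
 intros k; unfold shift_at; nat_cases.
Qed.
Lemma kfree_shk t c : kfree c (shk c t) = false.
Proof. rewrite shk_ren. apply kfree_ren_false. intros k _. unfold shift_at; nat_cases. Qed.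

Lemma ren_ext_kfree_mut :
 (forall t r r' s s', (forall x, r x = r' x) ->
    (forall k, kfree k t = true -> s k = s' k) -> ren r s t = ren r' s' t) /\
 (forall J r r' s s', (forall x, r x = r' x) ->
    (forall k, kfreej k J = true -> s k = s' k) -> renj r s J = renj r' s' J).
Proof.
 apply tm_jm_ind; intros; simpl in *; f_equal; eauto using up_ext.
 all: try (apply H; eauto using up_ext; intros; apply H1; rewrite H2; auto with bool; fail);
      try (apply H0; eauto using up_ext; intros; apply H2; rewrite H3; auto with bool; fail);
      try (apply H; eauto using up_ext; intros; apply H2; rewrite H3; auto with bool; fail).
 - apply H; auto. intros [|k] Hk; simpl; auto.
 - apply H1. rewrite Nat.eqb_refl; auto.
Qed.
Lemma ren_ext_kfree t r r' s s' : (forall x, r x = r' x) ->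
  (forall k, kfree k t = true -> s k = s' k) -> ren r s t = ren r' s' t.
Proof. apply ren_ext_kfree_mut. Qed.

Lemma crn_shk t c l : crn c l (shk c t) = t.
Proof.
 rewrite shk_ren, crn_ren, ren_comp. apply ren_id; auto.
 intros x; unfold shift_at, rename_at; nat_cases.
Qed.

Lemma shk_crn t c : kfree c t = false -> shk c (crn c c t) = t.
Proof.
 intros H. rewrite shk_ren, crn_ren, ren_comp.
 transitivity (ren (fun x => x) (fun x => x) t).
 - apply ren_ext_kfree; auto. intros k Hk. unfold shift_at, rename_at. nat_cases.
   subst; congruence.
 - apply ren_id; auto.
Qed.

Ltac ren_normalize :=
  rewrite ?sho_ren, ?shk_ren, ?crn_ren, ?shoj_ren, ?shkj_ren, ?crnj_ren, ?ren_comp, ?renj_comp.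

Lemma ren_up_id t s : ren (up (fun x => x)) s t = ren (fun x => x) s t.
Proof. ren_ext_idx. Qed.
Lemma renj_up_id J s : renj (up (fun x => x)) s J = renj (fun x => x) s J.
Proof. ren_ext_idx. Qed.

Lemma ren_sho V s c : ren (fun x => x) s (sho c V) = sho c (ren (fun x => x) s V).
Proof. ren_normalize. ren_ext_idx. Qed.
Lemma ren_sho1 M r s : ren (up (up r)) s (sho 1 M) = sho 1 (ren (up r) s M).
Proof. ren_normalize. ren_ext_idx. Qed.
Lemma ren_up_shk0 V r s : ren r (up s) (shk 0 V) = shk 0 (ren r s V).
Proof. ren_normalize. ren_ext_idx. Qed.
Lemma ren_shift_o ro rk b : ren (fun i => S (ro i)) rk b = sho 0 (ren ro rk b).
Proof. ren_normalize. ren_ext_idx. Qed.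
Lemma ren_shift_k ro rk b : ren ro (fun i => S (rk i)) b = shk 0 (ren ro rk b).
Proof. ren_normalize. ren_ext_idx. Qed.

Lemma ren_subst_mut :
 (forall t s j V, ren (fun x => x) s (subst_o j V t)
                  = subst_o j (ren (fun x => x) s V) (ren (fun x => x) s t)) /\
 (forall J s j V, renj (fun x => x) s (subst_oj j V J)
                  = subst_oj j (ren (fun x => x) s V) (renj (fun x => x) s J)).
Proof.
 apply tm_jm_ind; intros; simpl; rewrite ?ren_up_id, ?renj_up_id; f_equal; auto;
  rewrite ?H, ?ren_sho, ?ren_up_shk0; auto.
 destruct (n =? j); auto. destruct (j <? n); auto.
Qed.
Lemma ren_subst t s j V : ren (fun x => x) s (subst_o j V t)
  = subst_o j (ren (fun x => x) s V) (ren (fun x => x) s t).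
Proof. apply ren_subst_mut. Qed.

Lemma shk0_subst X j V : shk 0 (subst_o j V X) = subst_o j (shk 0 V) (shk 0 X).
Proof. rewrite !shk_ren. apply ren_subst. Qed.

Lemma subst_var_sho t : subst_o 0 (Var 0) (sho 1 t) = t.
Proof. rewrite subst_var, sho_ren, ren_comp. apply ren_id; auto. intros; idx_cases. Qed.

Lemma kfree_subst_mut :
 (forall t n j V, kfree n t = true -> kfree n (subst_o j V t) = true) /\
 (forall J n j V, kfreej n J = true -> kfreej n (subst_oj j V J) = true).
Proof.
 apply tm_jm_ind; intros; simpl in *; repeat rewrite orb_true_iff in *; try discriminate;
  try match goal with H: _ \/ _ |- _ => destruct H; [left|right] end; eauto.
Qed.
Lemma kfree_subst_inv_mut :
 (forall t n j V, kfree n (subst_o j V t) = true -> kfree n t = true \/ kfree n V = true) /\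
 (forall J n j V, kfreej n (subst_oj j V J) = true -> kfreej n J = true \/ kfree n V = true).
Proof.
 apply tm_jm_ind; intros; simpl in *; repeat rewrite orb_true_iff in *; try discriminate.
 - destruct (n =? j); auto. destruct (j <? n); simpl in *; discriminate.
 - destruct (H _ _ _ H0); auto. rewrite kfree_sho in H1; auto.
 - destruct H1 as [H1|H1]; [destruct (H _ _ _ H1)|destruct (H0 _ _ _ H1)]; auto.
 - destruct H1 as [H1|H1]; [destruct (H _ _ _ H1)|destruct (H0 _ _ _ H1)]; auto.
   rewrite kfree_sho in H2; auto.
 - destruct (H _ _ _ H0); auto. rewrite kfree_shk0 in H1; auto.
 - destruct H0 as [H0|H0]; auto. destruct (H _ _ _ H0); auto.
 - destruct H1 as [H1|H1]; [destruct (H _ _ _ H1)|destruct (H0 _ _ _ H1)]; auto.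
   rewrite kfree_sho in H2; auto.
Qed.
Lemma kfree_subst_inv t n j V :
  kfree n (subst_o j V t) = true -> kfree n t = true \/ kfree n V = true.
Proof. apply kfree_subst_inv_mut. Qed.
Lemma kfree_subst t n j V : kfree n V = false -> kfree n (subst_o j V t) = kfree n t.
Proof.
 intros H. destruct (kfree n t) eqn:E. apply kfree_subst_mut; auto.
 destruct (kfree n (subst_o j V t)) eqn:E2; auto.
 destruct (kfree_subst_inv _ _ _ _ E2); congruence.
Qed.

Lemma ren_ssub_mut :
 (forall t r s j M, (forall k, s k = s j -> k = j) ->
    ren r s (ssub j M t) = ssub (s j) (ren (up r) s M) (ren r s t)) /\
 (forall J r s j M, (forall k, s k = s j -> k = j) ->
    renj r s (ssubj j M J) = ssubj (s j) (ren (up r) s M) (renj r s J)).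
Proof.
 apply tm_jm_ind; intros; simpl; f_equal; auto; rewrite ?ren_sho1.
 all: try (rewrite H; auto; rewrite ?ren_sho1; auto; fail).
 - rewrite H. simpl. rewrite ren_up_shk0. auto.
   intros [|k]; simpl; intros E; try discriminate. injection E; intros E'.
   apply H0 in E'. subst; auto.
 - destruct (Nat.eqb_spec n j); subst.
   + rewrite Nat.eqb_refl. simpl. rewrite H; auto.
   + destruct (Nat.eqb_spec (s n) (s j)). apply H0 in e; contradiction.
     simpl; rewrite H; auto.
Qed.
Lemma ren_ssub t r s j M : (forall k, s k = s j -> k = j) ->
  ren r s (ssub j M t) = ssub (s j) (ren (up r) s M) (ren r s t).
Proof. apply ren_ssub_mut. Qed.
Lemma renj_ssub J r s j M : (forall k, s k = s j -> k = j) ->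
  renj r s (ssubj j M J) = ssubj (s j) (ren (up r) s M) (renj r s J).
Proof. apply ren_ssub_mut. Qed.

Lemma shk0_ssub X j M : shk 0 (ssub j M X) = ssub (S j) (shk 0 M) (shk 0 X).
Proof.
 rewrite !shk_ren, ren_ssub, ren_up_id; [reflexivity|].
 intros k; unfold shift_at; nat_cases.
Qed.

Lemma kfree_ssub_mut :
 (forall t n j M, kfree n t = true -> kfree n (ssub j M t) = true) /\
 (forall J n j M, kfreej n J = true -> kfreej n (ssubj j M J) = true).
Proof.
 apply tm_jm_ind; intros; simpl in *; repeat rewrite orb_true_iff in *; try discriminate;
  try match goal with H: _ \/ _ |- _ => destruct H; [left|right] end; eauto.
 destruct (n =? j); simpl; rewrite orb_true_iff; (destruct H0; [left; auto|right]); auto.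
 simpl; rewrite orb_true_iff; auto.
Qed.
Lemma kfree_ssub_inv_mut :
 (forall t n j M, kfree n (ssub j M t) = true -> kfree n t = true \/ kfree n M = true) /\
 (forall J n j M, kfreej n (ssubj j M J) = true -> kfreej n J = true \/ kfree n M = true).
Proof.
 apply tm_jm_ind; intros; simpl in *; repeat rewrite orb_true_iff in *; try discriminate.
 - destruct (H _ _ _ H0); auto. rewrite kfree_sho in H1; auto.
 - destruct H1 as [H1|H1]; [destruct (H _ _ _ H1)|destruct (H0 _ _ _ H1)]; auto.
 - destruct H1 as [H1|H1]; [destruct (H _ _ _ H1)|destruct (H0 _ _ _ H1)]; auto.
   rewrite kfree_sho in H2; auto.
 - destruct (H _ _ _ H0); auto. rewrite kfree_shk0 in H1; auto.
 - destruct (n =? j); simpl in H0; rewrite orb_true_iff in H0; destruct H0 as [H0|H0]; auto.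
   simpl in H0; rewrite orb_true_iff in H0. destruct H0 as [H0|H0]; auto.
   destruct (H _ _ _ H0); auto.
   destruct (H _ _ _ H0); auto.
 - destruct H1 as [H1|H1]; [destruct (H _ _ _ H1)|destruct (H0 _ _ _ H1)]; auto.
   rewrite kfree_sho in H2; auto.
Qed.
Lemma kfreej_ssub_inv J n j M :
  kfreej n (ssubj j M J) = true -> kfreej n J = true \/ kfree n M = true.
Proof. apply kfree_ssub_inv_mut. Qed.
Lemma kfree_ssub t n j M : kfree n M = false -> kfree n (ssub j M t) = kfree n t.
Proof.
 intros H. destruct (kfree n t) eqn:E. apply kfree_ssub_mut; auto.
 destruct (kfree n (ssub j M t)) eqn:E2; auto.
 destruct (proj1 kfree_ssub_inv_mut _ _ _ _ E2); congruence.
Qed.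

Lemma ssub_not_kfree_mut :
 (forall t j M, kfree j t = false -> ssub j M t = t) /\
 (forall J j M, kfreej j J = false -> ssubj j M J = J).
Proof.
 apply tm_jm_ind; intros; simpl in *; repeat rewrite orb_false_iff in *; f_equal; intuition.
 rewrite H1. f_equal; auto.
Qed.
Lemma ssub_not_kfree t j M : kfree j t = false -> ssub j M t = t.
Proof. apply ssub_not_kfree_mut. Qed.

Fixpoint jhead (J : jm) : nat := match J with Jmp k _ => k | JWh J _ => jhead J end.
Fixpoint jbody (J : jm) : tm := match J with Jmp _ m => m | JWh J m => Wh (jbody J) m end.

Lemma jhead_ren J r s : jhead (renj r s J) = s (jhead J).
Proof. revert r; induction J; simpl; auto. Qed.
Lemma jbody_ren J r s : jbody (renj r s J) = ren r s (jbody J).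
Proof. revert r; induction J; simpl; intros; rewrite ?IHJ; auto. Qed.
Lemma jhead_crnj K j l : jhead (crnj j l K) = rename_at j l (jhead K).
Proof. rewrite crnj_ren, jhead_ren; auto. Qed.
Lemma jbody_crnj K j l : jbody (crnj j l K) = crn j l (jbody K).
Proof. rewrite crnj_ren, jbody_ren, crn_ren; auto. Qed.
Lemma jhead_subst J j V : jhead (subst_oj j V J) = jhead J.
Proof. revert j V; induction J; simpl; auto. Qed.
Lemma jbody_subst J j V : jbody (subst_oj j V J) = subst_o j V (jbody J).
Proof. revert j V; induction J; simpl; intros; rewrite ?IHJ; auto. Qed.
Lemma jhead_ssub J j M : jhead (ssubj j M J) = jhead J.
Proof. revert M; induction J as [k m|J IHJ m]; simpl; intros; auto. destruct (k =? j); auto. Qed.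
Lemma jbody_ssub J j M : jhead J <> j -> jbody (ssubj j M J) = ssub j M (jbody J).
Proof.
 revert M; induction J as [k m|J IHJ m]; simpl; intros; auto.
 - destruct (Nat.eqb_spec k j); try contradiction; auto.
 - rewrite IHJ; auto.
Qed.
Lemma kfreej_flat J n : kfreej n J = (jhead J =? n) || kfree n (jbody J).
Proof. induction J; simpl; auto. rewrite IHJ, orb_assoc; auto. Qed.

Scheme eqt_ind' := Induction for eqt Sort Prop
with eqj_ind' := Induction for eqj Sort Prop.
Combined Scheme eqt_eqj_ind from eqt_ind', eqj_ind'.

Lemma eqj_flat J : eqj J (Jmp (jhead J) (jbody J)).
Proof.
 induction J as [k m|J IHJ m]; simpl. apply eqj_refl.
 eapply eqj_trans. apply eqj_JWh. apply IHJ. apply eqt_refl.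
 apply eqj_sym, eqj_E3.
Qed.
Lemma eqj_jhead_jbody J J' : eqj J J' -> jhead J = jhead J' /\ eqt (jbody J) (jbody J').
Proof. induction 1; simpl; intuition eauto using eqt; congruence. Qed.

Lemma kfree_eqt_mut :
 (forall a b, eqt a b -> forall n, kfree n a = kfree n b) /\
 (forall J J', eqj J J' -> forall n, kfreej n J = kfreej n J').
Proof.
 apply eqt_eqj_ind; intros; simpl; auto; try congruence.
 - rewrite kfree_sho, orb_assoc. auto.
 - rewrite kfree_shk0. auto.
 - rewrite orb_assoc; auto.
Qed.
Lemma kfree_eqt a b n : eqt a b -> kfree n a = kfree n b.
Proof. intros; apply kfree_eqt_mut; auto. Qed.

Lemma eqt_ren_mut :
 (forall a b, eqt a b -> forall r s, eqt (ren r s a) (ren r s b)) /\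
 (forall J J', eqj J J' -> forall r s, eqj (renj r s J) (renj r s J')).
Proof.
 apply eqt_eqj_ind; intros; simpl; eauto using eqt, eqj.
 - rewrite ren_sho1. apply eqt_E1.
 - rewrite ren_up_shk0. apply eqt_E2.
Qed.
Lemma eqt_ren a b r s : eqt a b -> eqt (ren r s a) (ren r s b).
Proof. intros; apply eqt_ren_mut; auto. Qed.
Lemma eqt_sho a b c : eqt a b -> eqt (sho c a) (sho c b).
Proof. rewrite !sho_ren. apply eqt_ren. Qed.
Lemma eqt_crn a b c l : eqt a b -> eqt (crn c l a) (crn c l b).
Proof. rewrite !crn_ren. apply eqt_ren. Qed.

Lemma eqt_ssub_mut :
 (forall a b, eqt a b -> forall j M, eqt (ssub j M a) (ssub j M b)) /\
 (forall J J', eqj J J' -> forall j M, eqj (ssubj j M J) (ssubj j M J')).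
Proof.
 apply eqt_eqj_ind; intros; simpl; eauto using eqt, eqj.
 - assert (E: ssub j (sho 1 (sho 1 M0)) (sho 1 L) = sho 1 (ssub j (sho 1 M0) L)).
   { rewrite (sho_ren (ssub _ _ _)), ren_ssub by auto. f_equal.
     ren_normalize. ren_ext_idx. rewrite sho_ren; auto. }
   rewrite E. apply eqt_E1.
 - assert (E: ssubj (S j) (sho 1 (shk 0 M0)) J = ssubj (S j) (shk 0 (sho 1 M0)) J).
   { f_equal. ren_normalize. ren_ext_idx. }
   rewrite E, <- shk0_ssub. apply eqt_E2.
 - destruct (k =? j); simpl; eauto using eqt, eqj.
 - destruct (k =? j); eauto using eqt, eqj.
Qed.
Lemma eqj_ssubj a b j M : eqj a b -> eqj (ssubj j M a) (ssubj j M b).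
Proof. intros; apply eqt_ssub_mut; auto. Qed.

(** * Vertical normal forms *)

(* [collapse K] is the eta_mu-contractum of [Mu K] when [K] is, up to (E3), of the
   form [[0] shk 0 X], and [Mu K] otherwise. *)
Definition collapse (K : jm) : tm :=
  if (jhead K =? 0) && negb (kfree 0 (jbody K)) then crn 0 0 (jbody K) else Mu K.

Fixpoint vnorm (t : tm) : tm :=
 match t with
 | Var x => Var x
 | Lam b => Lam (vnorm b)
 | App a b => App (vnorm a) (vnorm b)
 | Wh l m => Wh (vnorm l) (vnorm m)
 | Mu J => collapse (vnormj J)
 end
with vnormj (J : jm) : jm :=
 match J with
 | Jmp k m => Jmp k (vnorm m)
 | JWh J m => JWh (vnormj J) (vnorm m)
 end.

Lemma jhead_vnormj J : jhead (vnormj J) = jhead J.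
Proof. induction J; simpl; auto. Qed.
Lemma jbody_vnormj J : jbody (vnormj J) = vnorm (jbody J).
Proof. induction J; simpl; auto. rewrite IHJ; auto. Qed.
Lemma is_val_vnorm t : is_val t = true -> is_val (vnorm t) = true.
Proof. destruct t; simpl; auto; discriminate. Qed.

Lemma kfree_collapse K n : kfree n (collapse K) = kfreej (S n) K.
Proof.
 unfold collapse. rewrite kfreej_flat.
 destruct (Nat.eqb_spec (jhead K) 0); simpl.
 - rewrite e. destruct (kfree 0 (jbody K)) eqn:E; simpl.
   + rewrite kfreej_flat, e. auto.
   + rewrite <- (shk_crn _ _ E) at 2. rewrite kfree_shk0. auto.
 - rewrite kfreej_flat. auto.
Qed.

Lemma kfree_vnorm_mut :
 (forall t n, kfree n (vnorm t) = kfree n t) /\ (forall J n, kfreej n (vnormj J) = kfreej n J).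
Proof.
 apply tm_jm_ind; intros; simpl; rewrite ?H, ?H0; auto.
 rewrite kfree_collapse. auto.
Qed.
Lemma kfree_vnorm t n : kfree n (vnorm t) = kfree n t.
Proof. apply kfree_vnorm_mut. Qed.

Lemma collapse_eqj K K' : eqj K K' -> eqt (collapse K) (collapse K').
Proof.
 intros H. destruct (eqj_jhead_jbody _ _ H) as [H1 H2]. unfold collapse.
 rewrite H1, (kfree_eqt _ _ 0 H2).
 destruct ((jhead K' =? 0) && negb (kfree 0 (jbody K'))).
 apply eqt_crn; auto. apply eqt_Mu; auto.
Qed.

Lemma collapse_eta K X : jhead K = 0 -> jbody K = shk 0 X -> collapse K = X.
Proof.
 intros H1 H2. unfold collapse. rewrite H1, H2, kfree_shk. simpl. apply crn_shk.
Qed.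
Lemma collapse_other_head K : jhead K <> 0 -> collapse K = Mu K.
Proof. intros H. unfold collapse. destruct (Nat.eqb_spec (jhead K) 0); try contradiction. auto. Qed.
Lemma collapse_kfree K : kfree 0 (jbody K) = true -> collapse K = Mu K.
Proof. intros H. unfold collapse. rewrite H. rewrite andb_false_r. auto. Qed.

Ltac collapse_cases K :=
  let E := fresh "E" in let h := fresh "h" in let HS := fresh "HS" in let X := fresh "X" in
  destruct (Nat.eqb_spec (jhead K) 0) as [h|h];
  [ destruct (kfree 0 (jbody K)) eqn:E;
    [ | pose proof (shk_crn _ _ E) as HS; set (X := crn 0 0 (jbody K)) in * ] | ].

Lemma vnorm_ren_mut :
 (forall t r s, vnorm (ren r s t) = ren r s (vnorm t)) /\
 (forall J r s, vnormj (renj r s J) = renj r s (vnormj J)).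
Proof.
 apply tm_jm_ind; intros; simpl; rewrite ?H, ?H0; auto.
 set (K := vnormj j).
 collapse_cases K.
 - rewrite !collapse_kfree; auto. rewrite jbody_ren.
   rewrite <- (kfree_ren_inj _ r (up s) 0) in E; auto. intros [|k]; simpl; auto; discriminate.
 - rewrite (collapse_eta K X); auto.
   apply collapse_eta. rewrite jhead_ren, h; auto.
   rewrite jbody_ren, <- HS. apply ren_up_shk0.
 - rewrite !collapse_other_head; auto. rewrite jhead_ren. destruct (jhead K); simpl; auto.
Qed.
Lemma vnorm_ren t r s : vnorm (ren r s t) = ren r s (vnorm t).
Proof. apply vnorm_ren_mut. Qed.
Lemma vnormj_ren J r s : vnormj (renj r s J) = renj r s (vnormj J).
Proof. apply vnorm_ren_mut. Qed.
Lemma vnorm_sho t c : vnorm (sho c t) = sho c (vnorm t).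
Proof. rewrite !sho_ren. apply vnorm_ren. Qed.
Lemma vnorm_shk t c : vnorm (shk c t) = shk c (vnorm t).
Proof. rewrite !shk_ren. apply vnorm_ren. Qed.
Lemma vnorm_crn t c l : vnorm (crn c l t) = crn c l (vnorm t).
Proof. rewrite !crn_ren. apply vnorm_ren. Qed.
Lemma vnormj_crn J c l : vnormj (crnj c l J) = crnj c l (vnormj J).
Proof. rewrite !crnj_ren. apply vnormj_ren. Qed.

Lemma vnorm_subst_mut :
 (forall t j V, vnorm (subst_o j V t) = subst_o j (vnorm V) (vnorm t)) /\
 (forall J j V, vnormj (subst_oj j V J) = subst_oj j (vnorm V) (vnormj J)).
Proof.
 apply tm_jm_ind; intros; simpl; rewrite ?H, ?H0, ?vnorm_sho, ?vnorm_shk; auto.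
 - destruct (n =? j); auto. destruct (j <? n); auto.
 - set (K := vnormj j). set (V' := vnorm V).
   collapse_cases K.
   + rewrite !collapse_kfree; auto. rewrite jbody_subst, kfree_subst; auto. apply kfree_shk.
   + rewrite (collapse_eta K X); auto.
     apply collapse_eta. rewrite jhead_subst, h; auto.
     rewrite jbody_subst, <- HS, shk0_subst. rewrite HS. auto.
   + rewrite !collapse_other_head; auto. rewrite jhead_subst; auto.
Qed.
Lemma vnorm_subst t j V : vnorm (subst_o j V t) = subst_o j (vnorm V) (vnorm t).
Proof. apply vnorm_subst_mut. Qed.

Lemma vnorm_ssub_mut :
 (forall t j M, vnorm (ssub j M t) = ssub j (vnorm M) (vnorm t)) /\
 (forall J j M, vnormj (ssubj j M J) = ssubj j (vnorm M) (vnormj J)).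
Proof.
 apply tm_jm_ind; intros; simpl; rewrite ?H, ?H0, ?vnorm_sho, ?vnorm_shk; auto.
 - set (K := vnormj j). set (M' := vnorm M).
   collapse_cases K.
   + rewrite !collapse_kfree; auto. rewrite jbody_ssub, kfree_ssub; auto. apply kfree_shk. lia.
   + rewrite (collapse_eta K X); auto.
     apply collapse_eta. rewrite jhead_ssub, h; auto.
     rewrite jbody_ssub, <- HS, shk0_ssub. rewrite HS. auto. lia.
   + rewrite !collapse_other_head; auto. rewrite jhead_ssub; auto.
 - destruct (n =? j); simpl; rewrite ?H; auto.
Qed.
Lemma vnormj_ssub J j M : vnormj (ssubj j M J) = ssubj j (vnorm M) (vnormj J).
Proof. apply vnorm_ssub_mut. Qed.

Lemma vnorm_eqt_mut :
 (forall a b, eqt a b -> eqt (vnorm a) (vnorm b)) /\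
 (forall J J', eqj J J' -> eqj (vnormj J) (vnormj J')).
Proof.
 apply eqt_eqj_ind; intros; simpl; eauto using eqt, eqj, collapse_eqj.
 - rewrite vnorm_sho. apply eqt_E1.
 - rewrite vnorm_shk. set (K := vnormj J).
   collapse_cases K.
   + rewrite !collapse_kfree; simpl; rewrite ?E; simpl; auto using eqt_E2.
   + rewrite (collapse_eta K X); auto.
     rewrite (collapse_eta (JWh K (shk 0 (vnorm M))) (Wh X (vnorm M))). apply eqt_refl.
     simpl; auto. simpl. rewrite HS; auto.
   + rewrite !collapse_other_head; auto using eqt_E2.
Qed.
Lemma vnorm_eqt a b : eqt a b -> eqt (vnorm a) (vnorm b).
Proof. apply vnorm_eqt_mut. Qed.



Definition step_mod (Rt : tm -> tm -> Prop) (Rj : jm -> jm -> Prop) a b :=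
  eqt a b \/ comp Rt Rj a b.
Definition jstep_mod (Rt : tm -> tm -> Prop) (Rj : jm -> jm -> Prop) a b :=
  eqj a b \/ compj Rt Rj a b.
Definition reds Rt Rj := clos_refl_trans tm (step_mod Rt Rj).
Definition jreds Rt Rj := clos_refl_trans jm (jstep_mod Rt Rj).

Scheme comp_ind' := Induction for comp Sort Prop
with compj_ind' := Induction for compj Sort Prop.
Combined Scheme comp_compj_ind from comp_ind', compj_ind'.

Lemma clos_rt_map {A B} (R : relation A) (S : relation B) (f : A -> B) :
  (forall a b, R a b -> S (f a) (f b)) ->
  forall a b, clos_refl_trans A R a b -> clos_refl_trans B S (f a) (f b).
Proof.
 intros H a b Hab; induction Hab; [apply rt_step, H | apply rt_refl | eapply rt_trans]; eauto.
Qed.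

Section Closure.
Variables (Rt : tm -> tm -> Prop) (Rj : jm -> jm -> Prop).

Lemma reds_refl a : reds Rt Rj a a. Proof. apply rt_refl. Qed.
Lemma reds_trans a b c : reds Rt Rj a b -> reds Rt Rj b c -> reds Rt Rj a c.
Proof. apply rt_trans. Qed.
Lemma jreds_trans a b c : jreds Rt Rj a b -> jreds Rt Rj b c -> jreds Rt Rj a c.
Proof. apply rt_trans. Qed.
Lemma reds_eqt a b : eqt a b -> reds Rt Rj a b.
Proof. intros; apply rt_step; left; auto. Qed.
Lemma jreds_eqj a b : eqj a b -> jreds Rt Rj a b.
Proof. intros; apply rt_step; left; auto. Qed.
Lemma reds_root a b : Rt a b -> reds Rt Rj a b.
Proof. intros; apply rt_step; right; apply comp_root; auto. Qed.
Lemma jreds_root a b : Rj a b -> jreds Rt Rj a b.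
Proof. intros; apply rt_step; right; apply compj_root; auto. Qed.

Ltac reds_congr f eq_rule comp_rule :=
  apply (clos_rt_map _ _ f); intros ? ? [?|?];
  [left; apply eq_rule | right; apply comp_rule]; auto using eqt_refl, eqj_refl.

Lemma reds_Lam a b : reds Rt Rj a b -> reds Rt Rj (Lam a) (Lam b).
Proof. reds_congr Lam eqt_Lam comp_Lam. Qed.
Lemma reds_App1 a a' b : reds Rt Rj a a' -> reds Rt Rj (App a b) (App a' b).
Proof. reds_congr (fun x => App x b) eqt_App comp_App1. Qed.
Lemma reds_App2 a b b' : reds Rt Rj b b' -> reds Rt Rj (App a b) (App a b').
Proof. reds_congr (App a) eqt_App comp_App2. Qed.
Lemma reds_Wh1 a a' b : reds Rt Rj a a' -> reds Rt Rj (Wh a b) (Wh a' b).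
Proof. reds_congr (fun x => Wh x b) eqt_Wh comp_Wh1. Qed.
Lemma reds_Wh2 a b b' : reds Rt Rj b b' -> reds Rt Rj (Wh a b) (Wh a b').
Proof. reds_congr (Wh a) eqt_Wh comp_Wh2. Qed.
Lemma reds_Mu J J' : jreds Rt Rj J J' -> reds Rt Rj (Mu J) (Mu J').
Proof. reds_congr Mu eqt_Mu comp_Mu. Qed.
Lemma jreds_Jmp k a b : reds Rt Rj a b -> jreds Rt Rj (Jmp k a) (Jmp k b).
Proof. reds_congr (Jmp k) eqj_Jmp compj_Jmp. Qed.
Lemma jreds_JWh1 J J' t : jreds Rt Rj J J' -> jreds Rt Rj (JWh J t) (JWh J' t).
Proof. reds_congr (fun x => JWh x t) eqj_JWh compj_JWh1. Qed.
Lemma jreds_JWh2 J t t' : reds Rt Rj t t' -> jreds Rt Rj (JWh J t) (JWh J t').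
Proof. reds_congr (JWh J) eqj_JWh compj_JWh2. Qed.

Lemma reds_App a a' b b' :
  reds Rt Rj a a' -> reds Rt Rj b b' -> reds Rt Rj (App a b) (App a' b').
Proof. intros; eapply reds_trans; [apply reds_App1 | apply reds_App2]; eauto. Qed.
Lemma reds_Wh a a' b b' :
  reds Rt Rj a a' -> reds Rt Rj b b' -> reds Rt Rj (Wh a b) (Wh a' b').
Proof. intros; eapply reds_trans; [apply reds_Wh1 | apply reds_Wh2]; eauto. Qed.
Lemma jreds_JWh J J' t t' :
  jreds Rt Rj J J' -> reds Rt Rj t t' -> jreds Rt Rj (JWh J t) (JWh J' t').
Proof. intros; eapply jreds_trans; [apply jreds_JWh1 | apply jreds_JWh2]; eauto. Qed.

End Closure.

Lemma reds_mono (Rt Rt' : tm -> tm -> Prop) (Rj Rj' : jm -> jm -> Prop) :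
  (forall a b, Rt a b -> Rt' a b) -> (forall a b, Rj a b -> Rj' a b) ->
  forall a b, reds Rt Rj a b -> reds Rt' Rj' a b.
Proof.
 intros Ht Hj. apply (clos_rt_map _ _ (fun x => x)). intros a b [H|H]; [left|right]; auto.
 revert a b H; apply (comp_compj_ind Rt Rj (fun a b _ => comp Rt' Rj' a b)
                                    (fun a b _ => compj Rt' Rj' a b));
  eauto using comp, compj.
Qed.

Notation Red := (reds top_t top_j).
Notation RedJ := (jreds top_t top_j).
Notation VRed := (reds vtop_t vtop_j).
Notation VRedJ := (jreds vtop_t vtop_j).

Lemma vred_red a b : VRed a b -> Red a b.
Proof.
 apply reds_mono.
 - destruct 1; constructor.
 - destruct 1.
Qed.

Lemma top_t_renk a b s : top_t a b -> top_t (ren (fun x => x) s a) (ren (fun x => x) s b).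
Proof.
 assert (Hsho0 : forall V, ren (up (fun x => x)) s (sho 0 V) = sho 0 (ren (fun x => x) s V))
   by (intros; ren_normalize; ren_ext_idx).
 destruct 1; simpl; rewrite ?Hsho0, ?ren_up_id.
 - apply r_ad1. rewrite is_val_ren; auto.
 - apply r_ad2; rewrite is_val_ren; auto.
 - apply r_beta_lam. rewrite is_val_ren; auto.
 - rewrite ren_subst. apply r_beta_let. rewrite is_val_ren; auto.
 - rewrite renj_ssub by (intros [|k]; simpl; auto; discriminate).
   simpl. rewrite ren_up_shk0, ren_up_id. apply r_beta_mu.
 - apply r_eta_lam. rewrite is_val_ren; auto.
 - apply r_eta_let.
 - rewrite ren_up_shk0. apply r_eta_mu.
Qed.

Lemma top_j_renk J J' s : top_j J J' -> top_j (renj (fun x => x) s J) (renj (fun x => x) s J').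
Proof.
 destruct 1; simpl. rewrite !crnj_ren, !renj_comp.
 replace (renj _ (fun x => s (rename_at 0 l x)) J)
   with (renj (fun x => x) (rename_at 0 (s l)) (renj (fun x => x) (up s) J)).
 - rewrite <- crnj_ren. apply r_beta_jmp.
 - rewrite renj_comp. apply renj_ext; intros [|x]; auto.
Qed.

Lemma red_renk a b s : Red a b -> Red (ren (fun x => x) s a) (ren (fun x => x) s b).
Proof.
 apply (clos_rt_map _ _ (ren (fun x => x) s)). intros x y [H|H]; [left; apply eqt_ren; auto|right].
 revert x y H s.
 apply (comp_compj_ind top_t top_j
          (fun a b _ => forall s, comp top_t top_j (ren (fun x => x) s a) (ren (fun x => x) s b))
          (fun a b _ => forall s, compj top_t top_j (renj (fun x => x) s a) (renj (fun x => x) s b)));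
  intros; simpl; rewrite ?ren_up_id, ?renj_up_id;
  eauto using comp, compj, top_t_renk, top_j_renk.
Qed.
Lemma red_crn a b c l : Red a b -> Red (crn c l a) (crn c l b).
Proof. rewrite !crn_ren. apply red_renk. Qed.

Lemma kfree_top_t a b n : top_t a b -> kfree n b = true -> kfree n a = true.
Proof.
 destruct 1; simpl; intros Hb; repeat rewrite orb_true_iff in *; rewrite ?kfree_sho in *;
  try (intuition (auto || discriminate); fail).
 - destruct (kfree_subst_inv _ _ _ _ Hb); auto.
 - destruct (kfreej_ssub_inv _ _ _ _ Hb); auto. rewrite kfree_shk0 in *; auto.
 - rewrite kfree_shk0 in *; auto.
Qed.

Lemma kfree_top_j J J' n : top_j J J' -> kfreej n J' = true -> kfreej n J = true.
Proof.
 destruct 1; simpl; intros H; rewrite orb_true_iff.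
 rewrite crnj_ren in H. destruct (kfreej_ren_inv _ _ _ _ H) as [[|k] [E1 E2]];
  unfold rename_at in E1; simpl in E1; subst.
 - left. apply Nat.eqb_refl.
 - right. auto.
Qed.

Lemma red_kfree a b n : Red a b -> kfree n b = true -> kfree n a = true.
Proof.
 intros H; induction H as [x y [H|H]| |]; intros; eauto.
 - rewrite (kfree_eqt _ _ n H); auto.
 - revert x y H n H0.
   apply (comp_compj_ind top_t top_j
            (fun a b _ => forall n, kfree n b = true -> kfree n a = true)
            (fun a b _ => forall n, kfreej n b = true -> kfreej n a = true));
    intros; simpl in *; repeat rewrite orb_true_iff in *;
    intuition eauto using kfree_top_t, kfree_top_j.
Qed.
Lemma red_not_kfree a b n : Red a b -> kfree n a = false -> kfree n b = false.
Proof.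
 intros H1 H2. destruct (kfree n b) eqn:E; auto. rewrite (red_kfree _ _ _ H1 E) in H2; auto.
Qed.

Lemma vred_Mu_collapse K : VRed (Mu K) (collapse K).
Proof.
 collapse_cases K.
 - rewrite collapse_kfree; auto. apply reds_refl.
 - rewrite (collapse_eta K X); auto.
   eapply reds_trans. apply reds_eqt, eqt_Mu, eqj_flat.
   rewrite h, <- HS. apply reds_root, v_eta_mu.
 - rewrite collapse_other_head; auto. apply reds_refl.
Qed.
Lemma red_Mu_collapse K : Red (Mu K) (collapse K).
Proof. apply vred_red, vred_Mu_collapse. Qed.

Lemma vred_vnorm_mut : (forall t, VRed t (vnorm t)) /\ (forall J, VRedJ J (vnormj J)).
Proof.
 apply tm_jm_ind; intros; simpl;
  auto using reds_Lam, reds_App, reds_Wh, jreds_Jmp, jreds_JWh, reds_refl.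
 eapply reds_trans. apply reds_Mu; eauto. apply vred_Mu_collapse.
Qed.
Lemma red_vnorm t : Red t (vnorm t).
Proof. apply vred_red, vred_vnorm_mut. Qed.

Lemma vstep_vnorm_mut :
 (forall a b, comp vtop_t vtop_j a b -> eqt (vnorm a) (vnorm b)) /\
 (forall a b, compj vtop_t vtop_j a b -> eqj (vnormj a) (vnormj b)).
Proof.
 apply comp_compj_ind; intros; simpl; eauto using eqt, eqj, collapse_eqj.
 - match goal with H : vtop_t _ _ |- _ => destruct H end; simpl.
   rewrite vnorm_shk, (collapse_eta _ (vnorm M)); auto using eqt_refl.
 - match goal with H : vtop_j _ _ |- _ => destruct H end.
Qed.
Lemma vred_vnorm a b : VRed a b -> eqt (vnorm a) (vnorm b).
Proof.
 intros H; induction H as [x y [H|H]| |]; eauto using eqt.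
 - apply vnorm_eqt; auto.
 - apply vstep_vnorm_mut; auto.
Qed.

Lemma vnf_vnorm P : vnf P -> eqt P (vnorm P).
Proof.
 intros H. assert (G: forall Q R, VRed Q R -> eqt P Q -> eqt P R).
 { intros Q R HQ. induction HQ as [x y [H1|H1]| |]; intros; eauto using eqt.
   exfalso. eapply H; eauto. }
 apply G with P. apply vred_vnorm_mut. apply eqt_refl.
Qed.

(** * Projecting non-administrative reductions onto vertical normal forms *)

Inductive top_nadm : tm -> tm -> Prop :=
| n_beta_lam M V : is_val V = true -> top_nadm (App (Lam M) V) (Wh M V)
| n_beta_let M V : is_val V = true -> top_nadm (Wh M V) (subst_o 0 V M)
| n_beta_mu M J : top_nadm (Wh M (Mu J)) (Mu (ssubj 0 (shk 0 M) J))
| n_eta_lam V : is_val V = true -> top_nadm (Lam (App (sho 0 V) (Var 0))) V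
| n_eta_let M : top_nadm (Wh (Var 0) M) M
| n_eta_mu M : top_nadm (Mu (Jmp 0 (shk 0 M))) M.

Notation NRed := (reds top_nadm top_j).
Notation NRedJ := (jreds top_nadm top_j).

Fixpoint jwheres (J : jm) (ms : list tm) : jm :=
  match ms with nil => J | m :: ms => jwheres (JWh J m) ms end.
Fixpoint wheres (b : tm) (ms : list tm) : tm :=
  match ms with nil => b | m :: ms => wheres (Wh b m) ms end.

Lemma jhead_jwheres J ms : jhead (jwheres J ms) = jhead J.
Proof. revert J; induction ms; simpl; intros; rewrite ?IHms; auto. Qed.
Lemma jbody_jwheres J ms : jbody (jwheres J ms) = wheres (jbody J) ms.
Proof. revert J; induction ms; simpl; intros; rewrite ?IHms; auto. Qed.
Lemma redj_jwheres J J' ms : RedJ J J' -> RedJ (jwheres J ms) (jwheres J' ms).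
Proof. revert J J'; induction ms; simpl; intros; auto. apply IHms, jreds_JWh1; auto. Qed.
Lemma red_wheres b b' ms : Red b b' -> Red (wheres b ms) (wheres b' ms).
Proof. revert b b'; induction ms; simpl; intros; auto. apply IHms, reds_Wh1; auto. Qed.
Lemma kfree_wheres n b ms : kfree n (wheres b ms) = kfree n b || existsb (kfree n) ms.
Proof.
 revert b; induction ms; simpl; intros; rewrite ?orb_false_r, ?IHms; simpl;
  rewrite ?orb_assoc; auto.
Qed.
Lemma crn_wheres b ms : crn 0 0 (wheres b ms) = wheres (crn 0 0 b) (map (crn 0 0) ms).
Proof. revert b; induction ms; simpl; intros; auto. Qed.
Lemma eqt_wheres b b' ms : eqt b b' -> eqt (wheres b ms) (wheres b' ms).
Proof. revert b b'; induction ms; simpl; intros; auto. apply IHms, eqt_Wh; auto using eqt_refl. Qed.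
Lemma wheres_Mu K ms : eqt (wheres (Mu K) ms) (Mu (jwheres K (map (shk 0) ms))).
Proof.
 revert K; induction ms; simpl; intros. apply eqt_refl.
 eapply eqt_trans. apply eqt_wheres, eqt_E2. apply IHms.
Qed.
Lemma map_shk_crn ms : existsb (kfree 0) ms = false -> map (shk 0) (map (crn 0 0) ms) = ms.
Proof.
 induction ms; simpl; intros H; auto. apply orb_false_iff in H as [H1 H2].
 rewrite shk_crn, IHms; auto.
Qed.

Lemma collapse_not_kfree K :
  jhead K = 0 -> kfree 0 (jbody K) = false -> collapse K = crn 0 0 (jbody K).
Proof. intros H1 H2. unfold collapse. rewrite H1, H2. auto. Qed.
Lemma collapse_Mu_or_eta K :
  collapse K = Mu K \/ (jhead K = 0 /\ jbody K = shk 0 (collapse K)).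
Proof.
 collapse_cases K.
 - left; apply collapse_kfree; auto.
 - right. rewrite (collapse_eta K X); auto.
 - left; apply collapse_other_head; auto.
Qed.

Lemma red_collapse_Mu K K' : collapse K = Mu K -> RedJ K K' -> Red (collapse K) (collapse K').
Proof.
 intros H1 H2. rewrite H1. eapply reds_trans. apply reds_Mu; eauto. apply red_Mu_collapse.
Qed.
Lemma red_collapse K K' : jhead K = jhead K' -> RedJ K K' -> Red (jbody K) (jbody K') ->
  Red (collapse K) (collapse K').
Proof.
 intros H1 H2 H3. collapse_cases K.
 - apply red_collapse_Mu; auto. apply collapse_kfree; auto.
 - rewrite (collapse_not_kfree K), (collapse_not_kfree K'); auto. apply red_crn; auto.
   congruence. eapply red_not_kfree; eauto.
 - apply red_collapse_Mu; auto. apply collapse_other_head; auto.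
Qed.

Lemma top_nadm_vnorm a b : top_nadm a b -> Red (vnorm a) (vnorm b).
Proof.
 destruct 1; simpl.
 - apply reds_root, r_beta_lam, is_val_vnorm; auto.
 - rewrite vnorm_subst. apply reds_root, r_beta_let, is_val_vnorm; auto.
 - rewrite vnormj_ssub, vnorm_shk. set (K := vnormj J).
   destruct (collapse_Mu_or_eta K) as [HM | [Hh Hb]].
   + rewrite HM. eapply reds_trans. apply reds_root, r_beta_mu. apply red_Mu_collapse.
   + set (X := collapse K) in *. apply reds_eqt, eqt_sym.
     eapply eqt_trans. apply collapse_eqj, eqj_ssubj, eqj_flat.
     rewrite Hh, Hb. simpl. rewrite ssub_not_kfree by apply kfree_shk.
     rewrite (collapse_eta _ (Wh (vnorm M) X)); auto using eqt_refl.
 - rewrite vnorm_sho. apply reds_root, r_eta_lam, is_val_vnorm; auto.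
 - apply reds_root, r_eta_let.
 - rewrite vnorm_shk, (collapse_eta _ (vnorm M)); auto using reds_refl.
Qed.

Lemma redj_jmp_collapse l K : RedJ (Jmp l (collapse K)) (crnj 0 l K).
Proof.
 destruct (collapse_Mu_or_eta K) as [HM | [Hh Hb]].
 - rewrite HM. apply jreds_root, r_beta_jmp.
 - apply jreds_eqj. eapply eqj_trans. 2: apply eqj_sym, eqj_flat.
   rewrite jhead_crnj, jbody_crnj, Hh, Hb, crn_shk. apply eqj_refl.
Qed.

Lemma crnj11_not_kfree K : kfreej 1 K = false -> crnj 1 1 K = crnj 0 0 K.
Proof.
 intros H. assert (E: kfree 0 (Mu K) = false) by (simpl; auto).
 apply shk_crn in E. simpl in E. injection E; intros E'.
 transitivity (crnj 0 0 (shkj 1 (crnj 1 1 K))); [|rewrite E'; auto].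
 rewrite (shkj_ren (crnj 1 1 K)), (crnj_ren (renj _ _ _)), renj_comp.
 symmetry. apply renj_id; auto. intros x; idx_cases.
Qed.

Lemma red_collapse_jmp_collapse l K1 ms :
  Red (collapse (jwheres (Jmp l (collapse K1)) ms)) (collapse (jwheres (crnj 0 l K1) ms)).
Proof.
 set (K := jwheres (Jmp l (collapse K1)) ms).
 assert (HJ: RedJ K (jwheres (crnj 0 l K1) ms)) by (apply redj_jwheres, redj_jmp_collapse).
 collapse_cases K.
 - apply red_collapse_Mu; auto. apply collapse_kfree; auto.
 - rewrite (collapse_not_kfree K h E).
   unfold K in h, E |- *. rewrite jhead_jwheres in h; simpl in h. subst l.
   rewrite jbody_jwheres in E |- *; simpl in E |- *.
   destruct (collapse_Mu_or_eta K1) as [HM | [Hh Hb]].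
   + rewrite HM in *. rewrite kfree_wheres in E. apply orb_false_iff in E as [E1 E2].
     eapply reds_trans. 2: apply red_Mu_collapse. apply reds_eqt.
     rewrite crn_wheres. simpl. eapply eqt_trans. apply wheres_Mu.
     rewrite map_shk_crn, crnj11_not_kfree; auto using eqt_refl.
   + rewrite (collapse_not_kfree (jwheres (crnj 0 0 K1) ms));
      rewrite ?jhead_jwheres, ?jbody_jwheres, ?jhead_crnj, ?jbody_crnj, ?Hh, ?Hb, ?crn_shk;
      auto using reds_refl.
 - apply red_collapse_Mu; auto. apply collapse_other_head; auto.
Qed.

(* Whether a mu collapses depends on the whole where-spine of its jump, so the
   statement for jumps is generalised over every extension [ms] of that spine. *)
Lemma nred_vnorm_mut :
 (forall a b, comp top_nadm top_j a b -> Red (vnorm a) (vnorm b)) /\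
 (forall J J', compj top_nadm top_j J J' ->
    RedJ (vnormj J) (vnormj J') /\
    forall ms, Red (collapse (jwheres (vnormj J) ms)) (collapse (jwheres (vnormj J') ms))).
Proof.
 apply (comp_compj_ind top_nadm top_j (fun a b _ => Red (vnorm a) (vnorm b))
   (fun J J' _ => RedJ (vnormj J) (vnormj J') /\
      forall ms, Red (collapse (jwheres (vnormj J) ms)) (collapse (jwheres (vnormj J') ms))));
   intros; simpl; auto using top_nadm_vnorm, reds_Lam, reds_App1, reds_App2, reds_Wh1, reds_Wh2.
 - destruct H as [_ H]. apply (H nil).
 - match goal with H: top_j _ _ |- _ => destruct H end; simpl. rewrite vnormj_crn.
   split. apply redj_jmp_collapse. intros; apply red_collapse_jmp_collapse.
 - split. apply jreds_Jmp; auto.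
   intros ms. apply red_collapse.
   + rewrite !jhead_jwheres; auto.
   + apply redj_jwheres, jreds_Jmp; auto.
   + rewrite !jbody_jwheres; simpl. apply red_wheres; auto.
 - destruct H as [H1 H2]. split. apply jreds_JWh1; auto.
   intros ms. apply (H2 (vnorm t :: ms)).
 - split. apply jreds_JWh2; auto.
   intros ms. apply red_collapse.
   + rewrite !jhead_jwheres; auto.
   + apply redj_jwheres, jreds_JWh2; auto.
   + rewrite !jbody_jwheres; simpl. apply red_wheres, reds_Wh2; auto.
Qed.

Lemma nred_vnorm a b : NRed a b -> Red (vnorm a) (vnorm b).
Proof.
 intros H; induction H as [x y [H|H]| |].
 - apply reds_eqt, vnorm_eqt; auto.
 - apply nred_vnorm_mut; auto.
 - apply reds_refl.
 - eapply reds_trans; eauto.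
Qed.

(** * The inverse translation simulates target reductions *)

Scheme tT_ind' := Induction for tT Sort Prop
with tQ_ind' := Induction for tQ Sort Prop
with tW_ind' := Induction for tW Sort Prop
with tK_ind' := Induction for tK Sort Prop.
Combined Scheme target_ind from tT_ind', tQ_ind', tW_ind', tK_ind'.

Lemma inv_shW_mut :
 (forall t c, invT (shWT c t) = sho c (invT t)) /\
 (forall q c, invQ (shWQ c q) = shoj c (invQ q)) /\
 (forall w c, invW (shWW c w) = sho c (invW w)) /\
 (forall k c X, invK (shWK c k) (sho c X) = shoj c (invK k X)).
Proof.
 apply target_ind; intros; simpl; rewrite ?H, ?H0; auto.
 all: try (rewrite <- H0; auto).
Qed.
Lemma invQ_shW q c : invQ (shWQ c q) = shoj c (invQ q). Proof. apply inv_shW_mut. Qed.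
Lemma invW_shW w c : invW (shWW c w) = sho c (invW w). Proof. apply inv_shW_mut. Qed.

Lemma inv_shK_mut :
 (forall t c, invT (shKT c t) = shk c (invT t)) /\
 (forall q c, invQ (shKQ c q) = shkj c (invQ q)) /\
 (forall w c, invW (shKW c w) = shk c (invW w)) /\
 (forall k c X, invK (shKK c k) (shk c X) = shkj c (invK k X)).
Proof.
 apply target_ind; intros; simpl; rewrite ?H, ?H0; auto.
 all: try (rewrite <- H0; auto).
Qed.
Lemma invT_shK t c : invT (shKT c t) = shk c (invT t). Proof. apply inv_shK_mut. Qed.
Lemma invQ_shK q c : invQ (shKQ c q) = shkj c (invQ q). Proof. apply inv_shK_mut. Qed.
Lemma invW_shK w c : invW (shKW c w) = shk c (invW w). Proof. apply inv_shK_mut. Qed.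

Lemma inv_subW_mut :
 (forall t j w, invT (subWT j w t) = subst_o j (invW w) (invT t)) /\
 (forall q j w, invQ (subWQ j w q) = subst_oj j (invW w) (invQ q)) /\
 (forall v j w, invW (subWW j w v) = subst_o j (invW w) (invW v)) /\
 (forall k j w X, invK (subWK j w k) (subst_o j (invW w) X) = subst_oj j (invW w) (invK k X)).
Proof.
 apply target_ind; intros; simpl; rewrite ?H, ?H0, ?invW_shK, ?invW_shW; auto.
 all: try (destruct (n =? j); auto; destruct (j <? n); auto).
Qed.
Lemma invT_subW t j w : invT (subWT j w t) = subst_o j (invW w) (invT t).
Proof. apply inv_subW_mut. Qed.
Lemma invQ_subW q j w : invQ (subWQ j w q) = subst_oj j (invW w) (invQ q).
Proof. apply inv_subW_mut. Qed.

Lemma inv_subK_KVar_mut :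
 (forall t j n, invT (subKT j (KVar n) t) = crn j n (invT t)) /\
 (forall q j n, invQ (subKQ j (KVar n) q) = crnj j n (invQ q)) /\
 (forall v j n, invW (subKW j (KVar n) v) = crn j n (invW v)) /\
 (forall k j n X, invK (subKK j (KVar n) k) (crn j n X) = crnj j n (invK k X)).
Proof.
 apply target_ind; intros; simpl; rewrite ?H, ?H0; auto.
 all: try (destruct (n =? j); auto; destruct (j <? n); auto).
Qed.
Lemma invQ_subK_KVar q j n : invQ (subKQ j (KVar n) q) = crnj j n (invQ q).
Proof. apply inv_subK_KVar_mut. Qed.

Lemma jhead_invQ_shK q : jhead (invQ (shKQ 0 q)) = S (jhead (invQ q)).
Proof. rewrite invQ_shK, shkj_ren, jhead_ren. auto. Qed.
Lemma jbody_invQ_shK q : jbody (invQ (shKQ 0 q)) = shk 0 (jbody (invQ q)).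
Proof. rewrite invQ_shK, shkj_ren, jbody_ren, shk_ren. auto. Qed.
Lemma jhead_invQ_shW q : jhead (invQ (shWQ 1 q)) = jhead (invQ q).
Proof. rewrite invQ_shW, shoj_ren, jhead_ren. auto. Qed.
Lemma jbody_invQ_shW q : jbody (invQ (shWQ 1 q)) = sho 1 (jbody (invQ q)).
Proof. rewrite invQ_shW, shoj_ren, jbody_ren, sho_ren. auto. Qed.

(* Substituting the continuation [KLam q] for [j] is, after inversion, the structural
   substitution of the body of [invQ q] at [j] followed by renaming [j] to its head. *)
Lemma inv_subK_KLam_mut :
 (forall t j q, eqt (crn j (jhead (invQ q)) (ssub j (shk j (jbody (invQ q))) (invT t)))
                    (invT (subKT j (KLam q) t))) /\
 (forall q0 j q, eqj (crnj j (jhead (invQ q)) (ssubj j (shk j (jbody (invQ q))) (invQ q0)))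
                     (invQ (subKQ j (KLam q) q0))) /\
 (forall w j q, eqt (crn j (jhead (invQ q)) (ssub j (shk j (jbody (invQ q))) (invW w)))
                    (invW (subKW j (KLam q) w))) /\
 (forall k j q X X', eqt (crn j (jhead (invQ q)) (ssub j (shk j (jbody (invQ q))) X)) X' ->
    eqj (crnj j (jhead (invQ q)) (ssubj j (shk j (jbody (invQ q))) (invK k X)))
        (invK (subKK j (KLam q) k) X')).
Proof.
 assert (shk0_shk : forall b j, shk 0 (shk j b) = shk (S j) (shk 0 b))
   by (intros; ren_normalize; ren_ext_idx).
 assert (sho1_shk : forall b j, sho 1 (shk j b) = shk j (sho 1 b))
   by (intros; ren_normalize; ren_ext_idx).
 apply target_ind; intros; simpl; auto using eqt_App, eqt_refl.
 - apply eqt_Mu. specialize (H (S j) (shKQ 0 q)).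
   rewrite jhead_invQ_shK, jbody_invQ_shK, <- shk0_shk in H. auto.
 - apply eqt_Lam. specialize (H j (shWQ 1 q)).
   rewrite jhead_invQ_shW, jbody_invQ_shW, <- sho1_shk in H. auto.
 - destruct (Nat.eqb_spec n j).
   + subst. simpl. rewrite Nat.eqb_refl. simpl. rewrite crn_shk.
     eapply eqj_trans. apply eqj_E3. apply eqj_JWh; auto. apply eqj_sym, eqj_flat.
   + apply Nat.eqb_neq in n0. simpl. rewrite n0. simpl. rewrite ?n0.
     destruct (j <? n); apply eqj_Jmp; auto.
 - apply eqj_JWh; auto. specialize (H j (shWQ 1 q)).
   rewrite jhead_invQ_shW, jbody_invQ_shW, <- sho1_shk in H. auto.
Qed.

Lemma invW_val w : is_val (invW w) = true.
Proof. destruct w; auto. Qed.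

Lemma nredj_invK k X X' : NRed X X' -> NRedJ (invK k X) (invK k X').
Proof. destruct k; simpl; intros; auto using jreds_Jmp, jreds_JWh2. Qed.

Lemma nredj_invQ_betaK q k : NRedJ (invQ (QT (TLamK q) k)) (invQ (subKQ 0 k q)).
Proof.
 destruct k as [n|q']; simpl.
 - rewrite invQ_subK_KVar. apply jreds_root, r_beta_jmp.
 - eapply jreds_trans. apply jreds_eqj, eqj_flat. simpl.
   eapply jreds_trans. apply jreds_Jmp, reds_root, n_beta_mu.
   eapply jreds_trans. apply jreds_root, r_beta_jmp.
   apply jreds_eqj, (proj1 (proj2 inv_subK_KLam_mut) q 0 q').
Qed.

Lemma nredj_invQ_betaW q w : NRedJ (invQ (QK (KLam q) w)) (invQ (subWQ 0 w q)).
Proof.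
 eapply jreds_trans. apply jreds_eqj, eqj_flat. simpl.
 eapply jreds_trans. apply jreds_Jmp, reds_root, n_beta_let, invW_val.
 rewrite invQ_subW. apply jreds_eqj, eqj_sym.
 eapply eqj_trans. apply eqj_flat. rewrite jhead_subst, jbody_subst. apply eqj_refl.
Qed.

Lemma nredj_invK_etaK k X : NRedJ (invK (KLam (QK (shWK 0 k) (WVar 0))) X) (invK k X).
Proof.
 destruct k as [n|q]; simpl.
 - eapply jreds_trans. apply jreds_eqj, eqj_sym, eqj_E3.
   apply jreds_Jmp, reds_root, n_eta_let.
 - rewrite invQ_shW.
   eapply jreds_trans. apply jreds_eqj, eqj_flat. simpl.
   rewrite shoj_ren, jhead_ren, jbody_ren, <- sho_ren.
   eapply jreds_trans. apply jreds_Jmp, reds_Wh1, reds_root, n_beta_let; auto.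
   rewrite subst_var_sho. apply jreds_eqj, eqj_sym, eqj_flat.
Qed.

Scheme stT_ind' := Induction for stT Sort Prop
with stQ_ind' := Induction for stQ Sort Prop
with stW_ind' := Induction for stW Sort Prop
with stK_ind' := Induction for stK Sort Prop.
Combined Scheme target_step_ind from stT_ind', stQ_ind', stW_ind', stK_ind'.

Lemma nred_inv_step_mut :
 (forall t t', stT t t' -> NRed (invT t) (invT t')) /\
 (forall q q', stQ q q' -> NRedJ (invQ q) (invQ q')) /\
 (forall w w', stW w w' -> NRed (invW w) (invW w')) /\
 (forall k k', stK k k' -> forall X, NRedJ (invK k X) (invK k' X)).
Proof.
 apply target_step_ind; intros;
  try solve [apply nredj_invQ_betaK | apply nredj_invQ_betaW | apply nredj_invK_etaK];
  simpl; auto using reds_Mu, reds_App1, reds_App2, reds_Lam, jreds_JWh1, nredj_invK.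
 - eapply reds_trans. apply reds_root, n_beta_lam, invW_val.
   rewrite invT_subW. apply reds_root, n_beta_let, invW_val.
 - rewrite invT_shK. apply reds_root, n_eta_mu.
 - rewrite invW_shW. apply reds_root, n_eta_lam, invW_val.
Qed.

Lemma nred_inv_tred N N' : tred N N' -> NRed (invT N) (invT N').
Proof.
 induction 1; [apply nred_inv_step_mut; auto | apply reds_refl | eapply reds_trans; eauto].
Qed.

(** * Administrative reduction to the inverse of the CPS translation *)

Definition khead (K : tK) : nat :=
  match K with KVar n => n | KLam q => jhead (invQ q) end.
Definition kbody (K : tK) : option tm :=
  match K with KVar _ => None | KLam q => Some (jbody (invQ q)) end.
Definition where_opt (o : option tm) (X : tm) : tm :=
  match o with None => X | Some B => Wh B X end.
Definition body_match (o' o : option tm) : Prop :=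
  match o', o with
  | None, None => True
  | Some B', Some B => eqt (vnorm B') (vnorm B)
  | _, _ => False
  end.

Lemma jhead_invK K X : jhead (invK K X) = khead K.
Proof. destruct K; auto. Qed.
Lemma jbody_invK K X : jbody (invK K X) = where_opt (kbody K) X.
Proof. destruct K; auto. Qed.
Lemma khead_shW K : khead (shWK 0 K) = khead K.
Proof. destruct K; simpl; auto. rewrite jhead_invQ_shW; auto. Qed.
Lemma kbody_shW K : kbody (shWK 0 K) = option_map (sho 1) (kbody K).
Proof. destruct K; simpl; auto. rewrite jbody_invQ_shW; auto. Qed.

Lemma where_opt_E1 o P X :
  eqt (where_opt o (Wh P X)) (Wh (where_opt (option_map (sho 1) o) P) X).
Proof. destruct o; simpl. apply eqt_E1. apply eqt_refl. Qed.
Lemma red_where_opt o X X' : Red X X' -> Red (where_opt o X) (where_opt o X').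
Proof. destruct o; simpl; auto using reds_Wh2. Qed.
Lemma body_match_sho o' o :
  body_match o' o -> body_match (option_map (sho 1) o') (option_map (sho 1) o).
Proof. destruct o', o; simpl; auto. rewrite !vnorm_sho. apply eqt_sho. Qed.
Lemma vnorm_where_opt o' o X X' : body_match o' o -> eqt (vnorm X) (vnorm X') ->
  eqt (vnorm (where_opt o' X)) (vnorm (where_opt o X')).
Proof. destruct o', o; simpl; intros; try contradiction; auto using eqt_Wh. Qed.

(* [cps_reachable M]: for every continuation [K], the inverse of [<M>[K]] is a jump to
   the head of [K] whose body is reached (up to vertical normalisation) by reducing [M]
   plugged into the body of [K]; [o'] is any body with the same vertical normal form. *)
Definition cps_reachable (M : tm) : Prop := forall ro rk K o', body_match o' (kbody K) ->
  exists Y, Red (where_opt o' (ren ro rk M)) Y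
            /\ eqt (vnorm Y) (vnorm (jbody (invQ (cps M ro rk K))))
            /\ jhead (invQ (cps M ro rk K)) = khead K.
Lemma cps_reachable_of_inv M W :
  (forall ro rk K, invQ (cps M ro rk K) = invK K (W ro rk)) ->
  (forall ro rk, exists Y, Red (ren ro rk M) Y /\ eqt (vnorm Y) (vnorm (W ro rk))) ->
  cps_reachable M.
Proof.
 intros E HW ro rk K o' Hm. destruct (HW ro rk) as [Y [H1 H2]].
 exists (where_opt o' Y). rewrite E, jbody_invK, jhead_invK.
 auto using red_where_opt, vnorm_where_opt.
Qed.

Lemma red_shk_vnorm_Mu Z Y Jb : Red (shk 0 Z) Y -> eqt (vnorm Y) (vnorm (jbody Jb)) ->
  jhead Jb = 0 -> Red Z (crn 0 0 Y) /\ eqt (vnorm (crn 0 0 Y)) (vnorm (Mu Jb)).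
Proof.
 intros H1 H2 H3.
 assert (E: kfree 0 Y = false) by (eapply red_not_kfree; eauto; apply kfree_shk).
 split.
 - rewrite <- (crn_shk Z 0 0). apply red_crn; auto.
 - simpl. rewrite collapse_not_kfree, vnorm_crn, jbody_vnormj.
   + apply eqt_crn; auto.
   + rewrite jhead_vnormj; auto.
   + rewrite jbody_vnormj, <- (kfree_eqt _ _ 0 H2), kfree_vnorm; auto.
Qed.

Definition star_reachable (M : tm) : Prop := is_val M = true -> forall ro rk,
  exists Y, is_val Y = true /\ Red (ren ro rk M) Y /\ eqt (vnorm Y) (vnorm (invW (star M ro rk))).
Definition cpsj_reachable (J : jm) : Prop := forall ro rk,
  exists J0, RedJ (renj ro rk J) J0 /\ eqj (vnormj J0) (vnormj (invQ (cpsj J ro rk))).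

Lemma cps_val M ro rk K : is_val M = true -> cps M ro rk K = QK K (star M ro rk).
Proof. destruct M; simpl; auto; discriminate. Qed.

Lemma cps_reachable_val M : is_val M = true -> star_reachable M -> cps_reachable M.
Proof.
 intros HM VM. apply cps_reachable_of_inv with (W := fun ro rk => invW (star M ro rk)).
 - intros. rewrite cps_val; auto.
 - intros ro rk. destruct (VM HM ro rk) as [Y [_ HY]]. eauto.
Qed.

Lemma star_reachable_Var n : star_reachable (Var n).
Proof. intros _ ro rk. exists (Var (ro n)). auto using reds_refl, eqt_refl. Qed.

Lemma star_reachable_Lam b : cps_reachable b -> star_reachable (Lam b).
Proof.
 intros Cb _ ro rk.
 destruct (Cb (up ro) (fun i => S (rk i)) (KVar 0) None I) as [Y [H1 [H2 H3]]].
 simpl in H1. rewrite ren_shift_k in H1.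
 destruct (red_shk_vnorm_Mu _ _ _ H1 H2 H3) as [C1 C2].
 exists (Lam (crn 0 0 Y)). split; auto. split.
 - apply reds_Lam; auto.
 - apply eqt_Lam, C2.
Qed.

Lemma cps_reachable_App_vv a b : is_val a = true -> is_val b = true ->
  star_reachable a -> star_reachable b -> cps_reachable (App a b).
Proof.
 intros Ea Eb Va Vb.
 apply cps_reachable_of_inv
   with (W := fun ro rk => App (invW (star a ro rk)) (invW (star b ro rk))).
 - intros; simpl; rewrite Ea, Eb; auto.
 - intros ro rk.
   destruct (Va Ea ro rk) as [Ya [_ [HYa1 HYa2]]]. destruct (Vb Eb ro rk) as [Yb [_ [HYb1 HYb2]]].
   exists (App Ya Yb). split. apply reds_App; auto. simpl. apply eqt_App; auto.
Qed.

Lemma cps_reachable_App_vn a b : is_val a = true -> is_val b = false ->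
  star_reachable a -> cps_reachable b -> cps_reachable (App a b).
Proof.
 intros Ea Eb Va Cb ro rk K o' Hm.
 set (K2 := KLam (QT (TApp (shWW 0 (star a ro rk)) (WVar 0)) (shWK 0 K))).
 replace (cps (App a b) ro rk K) with (cps b ro rk K2) by (simpl; rewrite Ea, Eb; auto).
 destruct (Va Ea ro rk) as [Ya [HYa [HYa1 HYa2]]].
 set (B2 := where_opt (option_map (sho 1) o') (App (sho 0 Ya) (Var 0))).
 assert (Hm2: body_match (Some B2) (kbody K2)).
 { simpl. rewrite jbody_invK, kbody_shW, invW_shW.
   apply vnorm_where_opt. apply body_match_sho; auto.
   simpl. rewrite !vnorm_sho. apply eqt_App; auto using eqt_refl, eqt_sho. }
 destruct (Cb ro rk K2 (Some B2) Hm2) as [Y [HY1 [HY2 HY3]]].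
 exists Y. split; [|split; auto].
 - eapply reds_trans. apply red_where_opt, reds_App1, HYa1.
   eapply reds_trans. apply red_where_opt, reds_root, r_ad2; auto. rewrite is_val_ren; auto.
   eapply reds_trans. apply reds_eqt, where_opt_E1. apply HY1.
 - rewrite HY3. simpl. rewrite jhead_invK, khead_shW. auto.
Qed.

Lemma cps_reachable_App_nv a b : is_val a = false -> is_val b = true ->
  cps_reachable a -> star_reachable b -> cps_reachable (App a b).
Proof.
 intros Ea Eb Ca Vb ro rk K o' Hm.
 set (K1 := KLam (QT (TApp (WVar 0) (shWW 0 (star b ro rk))) (shWK 0 K))).
 replace (cps (App a b) ro rk K) with (cps a ro rk K1) by (simpl; rewrite Ea, Eb; auto).
 destruct (Vb Eb ro rk) as [Yb [HYb [HYb1 HYb2]]].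
 set (B1 := where_opt (option_map (sho 1) o') (App (Var 0) (sho 0 Yb))).
 assert (Hm1: body_match (Some B1) (kbody K1)).
 { simpl. rewrite jbody_invK, kbody_shW, invW_shW.
   apply vnorm_where_opt. apply body_match_sho; auto.
   simpl. rewrite !vnorm_sho. apply eqt_App; auto using eqt_refl, eqt_sho. }
 destruct (Ca ro rk K1 (Some B1) Hm1) as [Y [HY1 [HY2 HY3]]].
 exists Y. split; [|split; auto].
 - eapply reds_trans. apply red_where_opt, reds_App2, HYb1.
   eapply reds_trans. apply red_where_opt, reds_root, r_ad1. rewrite is_val_ren; auto.
   eapply reds_trans. apply reds_eqt, where_opt_E1. apply HY1.
 - rewrite HY3. simpl. rewrite jhead_invK, khead_shW. auto.
Qed.

Lemma cps_reachable_App_nn a b : is_val a = false -> is_val b = false ->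
  cps_reachable a -> cps_reachable b -> cps_reachable (App a b).
Proof.
 intros Ea Eb Ca Cb ro rk K o' Hm.
 set (K3 := KLam (QT (TApp (WVar 1) (WVar 0)) (shWK 0 (shWK 0 K)))).
 set (Kb := KLam (cps b (fun i => S (ro i)) rk K3)).
 replace (cps (App a b) ro rk K) with (cps a ro rk Kb) by (simpl; rewrite Ea, Eb; auto).
 set (o1 := option_map (sho 1) o'). set (o2 := option_map (sho 1) o1).
 assert (Hm3: body_match (Some (where_opt o2 (App (Var 1) (Var 0)))) (kbody K3)).
 { simpl. rewrite jbody_invK, !kbody_shW.
   apply vnorm_where_opt, eqt_refl. apply body_match_sho, body_match_sho; auto. }
 destruct (Cb (fun i => S (ro i)) rk K3 _ Hm3) as [Yb [HYb1 [HYb2 HYb3]]].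
 assert (Hmb: body_match (Some Yb) (kbody Kb)) by (simpl; auto).
 destruct (Ca ro rk Kb (Some Yb) Hmb) as [Y [HY1 [HY2 HY3]]].
 exists Y. split; [|split; auto].
 - eapply reds_trans. apply red_where_opt, reds_root, r_ad1. rewrite is_val_ren; auto.
   eapply reds_trans. apply reds_eqt, where_opt_E1. fold o1.
   eapply reds_trans. apply reds_Wh1. 2: apply HY1.
   eapply reds_trans. apply red_where_opt, reds_root, r_ad2.
   + auto.
   + destruct b; try discriminate; reflexivity.
   + eapply reds_trans. apply reds_eqt, where_opt_E1. fold o2. simpl.
     rewrite <- ren_shift_o. apply HYb1.
 - rewrite HY3. simpl. rewrite HYb3. simpl. rewrite jhead_invK, !khead_shW. auto.
Qed.

Lemma cps_reachable_Wh l m : cps_reachable l -> cps_reachable m -> cps_reachable (Wh l m).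
Proof.
 intros Cl Cm ro rk K o' Hm. simpl ren. simpl cps.
 assert (Hml: body_match (option_map (sho 1) o') (kbody (shWK 0 K))).
 { rewrite kbody_shW. apply body_match_sho; auto. }
 destruct (Cl (up ro) rk (shWK 0 K) _ Hml) as [Yl [HYl1 [HYl2 HYl3]]].
 set (Kl := KLam (cps l (up ro) rk (shWK 0 K))).
 assert (Hmm: body_match (Some Yl) (kbody Kl)) by (simpl; auto).
 destruct (Cm ro rk Kl (Some Yl) Hmm) as [Y [HY1 [HY2 HY3]]].
 exists Y. split; [|split; auto].
 - eapply reds_trans. apply reds_eqt, where_opt_E1.
   eapply reds_trans. apply reds_Wh1, HYl1. apply HY1.
 - rewrite HY3. simpl. rewrite HYl3, khead_shW. auto.
Qed.

Lemma cps_reachable_Mu J : cpsj_reachable J -> cps_reachable (Mu J).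
Proof.
 intros CJ. apply cps_reachable_of_inv with (W := fun ro rk => Mu (invQ (cpsj J ro (up rk)))).
 - reflexivity.
 - intros ro rk. destruct (CJ ro (up rk)) as [J0 [H1 H2]].
   exists (Mu J0). split; simpl; auto using reds_Mu, collapse_eqj.
Qed.

Lemma eqj_vnormj_flat Q : eqj (vnormj Q) (Jmp (jhead Q) (vnorm (jbody Q))).
Proof. rewrite <- jhead_vnormj, <- jbody_vnormj. apply eqj_flat. Qed.

Lemma cpsj_reachable_Jmp k m : cps_reachable m -> cpsj_reachable (Jmp k m).
Proof.
 intros Cm ro rk.
 destruct (Cm ro rk (KVar (rk k)) None I) as [Y [HY1 [HY2 HY3]]].
 exists (Jmp (rk k) Y). split.
 - apply jreds_Jmp; auto.
 - simpl vnormj at 1. simpl cpsj. eapply eqj_trans. 2: apply eqj_sym, eqj_vnormj_flat.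
   rewrite HY3. apply eqj_Jmp; auto.
Qed.

Lemma cpsj_reachable_JWh J m : cpsj_reachable J -> cps_reachable m -> cpsj_reachable (JWh J m).
Proof.
 intros CJ Cm ro rk.
 destruct (CJ (up ro) rk) as [J0 [HJ1 HJ2]].
 destruct (eqj_jhead_jbody _ _ HJ2) as [Hh Hb].
 rewrite !jhead_vnormj in Hh. rewrite !jbody_vnormj in Hb.
 set (Kj := KLam (cpsj J (up ro) rk)).
 assert (Hmj: body_match (Some (jbody J0)) (kbody Kj)) by (simpl; auto).
 destruct (Cm ro rk Kj (Some (jbody J0)) Hmj) as [Y [HY1 [HY2 HY3]]].
 exists (Jmp (jhead J0) Y). split.
 - simpl. eapply jreds_trans. apply jreds_JWh1, HJ1.
   eapply jreds_trans. apply jreds_eqj, eqj_flat. apply jreds_Jmp, HY1.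
 - simpl vnormj at 1. simpl cpsj. eapply eqj_trans. 2: apply eqj_sym, eqj_vnormj_flat.
   unfold Kj in *. rewrite HY3. simpl. rewrite Hh. apply eqj_Jmp; auto.
Qed.

Lemma star_reachable_nonval M : is_val M = false -> star_reachable M.
Proof. intros H1 H2. congruence. Qed.

Lemma cps_reachable_mut :
  (forall M, cps_reachable M /\ star_reachable M) /\ (forall J, cpsj_reachable J).
Proof.
 apply tm_jm_ind; intros; repeat match goal with H : _ /\ _ |- _ => destruct H end;
  auto using cps_reachable_Wh, cps_reachable_Mu, cpsj_reachable_Jmp, cpsj_reachable_JWh,
             star_reachable_nonval.
 - split; auto using cps_reachable_val, star_reachable_Var.
 - split; auto using cps_reachable_val, star_reachable_Lam.
 - split; auto using star_reachable_nonval.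
   destruct (is_val t) eqn:Ea, (is_val t0) eqn:Eb;
    auto using cps_reachable_App_vv, cps_reachable_App_vn, cps_reachable_App_nv,
               cps_reachable_App_nn.
Qed.

Lemma red_vnorm_inv_cps_top M : Red M (vnorm (invT (cps_top M))).
Proof.
 destruct (proj1 (proj1 cps_reachable_mut M) (fun i => i) S (KVar 0) None I)
   as [Y [H1 [H2 H3]]].
 simpl in H1. replace (ren (fun i => i) S M) with (shk 0 M) in H1
   by (rewrite shk_ren; apply ren_ext; auto).
 destruct (red_shk_vnorm_Mu _ _ _ H1 H2 H3) as [C1 C2].
 eapply reds_trans. apply C1.
 eapply reds_trans. apply red_vnorm. apply reds_eqt, C2.
Qed.

Theorem theorem1p34 (M : tm) (N : tT) :
  tred (cps_top M) N ->
  forall P : tm, vred (invT N) P -> vnf P -> red M P.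
Proof.
 intros HN P HP Hnf. change (Red M P).
 eapply reds_trans. apply red_vnorm_inv_cps_top.
 eapply reds_trans. apply nred_vnorm, nred_inv_tred, HN.
 apply reds_eqt. eapply eqt_trans. apply (vred_vnorm _ _ HP).
 apply eqt_sym, vnf_vnorm, Hnf.
Qed.
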